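(* Any strongly regular Weingarten surface in $\mathbb R^3$ admits locally geometric principal parameters.
   Context: For a surface $x=x(u,v)$ without umbilical points parameterized by principal parameters ($F=M=0$, with $E,F,G$, $L,M,N$ the coefficients of the first and second fundamental forms): $\nu_1=L/E$, $\nu_2=N/G$, $\gamma_1=-\frac{E_v}{2E\sqrt G}$, $\gamma_2=\frac{G_u}{2G\sqrt E}$. The surface is strongly regular if $(\nu_1-\nu_2)\gamma_1\gamma_2\neq0$, with the convention $\nu_1-\nu_2>0$. A strongly regular surface is Weingarten if there exist differentiable $f(\nu),g(\nu)$, $\nu\in\mathcal I\subseteq\mathbb R$, with $f-g>0$, $f'g'\neq0$, and a differentiable $\nu(u,v)\in\mathcal I$ with $\nu_u\nu_v\neq0$, such that $\nu_1=f(\nu)$, $\nu_2=g(\nu)$. With $\Phi$ an antiderivative of $f'/(f-g)$ and $\Psi$ an antiderivative of $g'/(g-f)$, put $\lambda=\ln\sqrt E+\Phi(\nu)$ and $\mu=\ln\sqrt G+\Psi(\nu)$ (one always has $\lambda_v=0$, $\mu_u=0$). Principal parameters $(u,v)$ on a strongly regular Weingarten surface are called geometric principal parameters if $\lambda$ and $\mu$ are constants. *)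

From Stdlib Require Import Reals.
From Coquelicot Require Import Coquelicot.
Open Scope R_scope.

Definition vec3 := (R * R * R)%type.
Definition v1 (a : vec3) : R := fst (fst a).
Definition v2 (a : vec3) : R := snd (fst a).
Definition v3 (a : vec3) : R := snd a.
Definition dot (a b : vec3) : R := v1 a * v1 b + v2 a * v2 b + v3 a * v3 b.
Definition cross (a b : vec3) : vec3 :=
  (v2 a * v3 b - v3 a * v2 b, v3 a * v1 b - v1 a * v3 b, v1 a * v2 b - v2 a * v1 b).
Definition vscale (c : R) (a : vec3) : vec3 := (c * v1 a, c * v2 a, c * v3 a).
Definition vnorm (a : vec3) : R := sqrt (dot a a).

Definition pu (h : R -> R -> R) (u v : R) : R := Derive (fun t => h t v) u.
Definition pv (h : R -> R -> R) (u v : R) : R := Derive (fun t => h u t) v.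

Definition open2 (D : R -> R -> Prop) : Prop := open (fun p : R * R => D (fst p) (snd p)).

Fixpoint Ck (k : nat) (h : R -> R -> R) (D : R -> R -> Prop) : Prop :=
  match k with
  | O => forall u v, D u v -> continuous (fun p : R * R => h (fst p) (snd p)) (u, v)
  | S k' => (forall u v, D u v -> continuous (fun p : R * R => h (fst p) (snd p)) (u, v))
            /\ (forall u v, D u v -> ex_derive (fun t => h t v) u /\ ex_derive (fun t => h u t) v)
            /\ Ck k' (pu h) D /\ Ck k' (pv h) D
  end.
Definition smooth (h : R -> R -> R) (D : R -> R -> Prop) : Prop := forall k, Ck k h D.

Definition surface := R -> R -> vec3.
Definition sx (s : surface) : R -> R -> R := fun u v => v1 (s u v).
Definition sy (s : surface) : R -> R -> R := fun u v => v2 (s u v).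
Definition sz (s : surface) : R -> R -> R := fun u v => v3 (s u v).
Definition Su (s : surface) : surface := fun u v => (pu (sx s) u v, pu (sy s) u v, pu (sz s) u v).
Definition Sv (s : surface) : surface := fun u v => (pv (sx s) u v, pv (sy s) u v, pv (sz s) u v).

Definition regular_surface (s : surface) (D : R -> R -> Prop) : Prop :=
  open2 D /\ smooth (sx s) D /\ smooth (sy s) D /\ smooth (sz s) D /\
  (forall u v, D u v -> cross (Su s u v) (Sv s u v) <> (0, 0, 0)).

Definition fE (s : surface) : R -> R -> R := fun u v => dot (Su s u v) (Su s u v).
Definition fF (s : surface) : R -> R -> R := fun u v => dot (Su s u v) (Sv s u v).
Definition fG (s : surface) : R -> R -> R := fun u v => dot (Sv s u v) (Sv s u v).
Definition unormal (s : surface) (u v : R) : vec3 :=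
  let c := cross (Su s u v) (Sv s u v) in vscale (/ vnorm c) c.
Definition fL (s : surface) : R -> R -> R := fun u v => dot (Su (Su s) u v) (unormal s u v).
Definition fM (s : surface) : R -> R -> R := fun u v => dot (Sv (Su s) u v) (unormal s u v).
Definition fN (s : surface) : R -> R -> R := fun u v => dot (Sv (Sv s) u v) (unormal s u v).

Definition nu1 (s : surface) : R -> R -> R := fun u v => fL s u v / fE s u v.
Definition nu2 (s : surface) : R -> R -> R := fun u v => fN s u v / fG s u v.
Definition gam1 (s : surface) : R -> R -> R :=
  fun u v => - pv (fE s) u v / (2 * fE s u v * sqrt (fG s u v)).
Definition gam2 (s : surface) : R -> R -> R :=
  fun u v => pu (fG s) u v / (2 * fG s u v * sqrt (fE s u v)).

(** (u,v) are principal parameters (F = M = 0) on D, without umbilical points,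
    and the surface is strongly regular, with the convention nu1 - nu2 > 0. *)
Definition strongly_regular_principal (s : surface) (D : R -> R -> Prop) : Prop :=
  regular_surface s D /\
  (forall u v, D u v -> fF s u v = 0 /\ fM s u v = 0) /\
  (forall u v, D u v -> nu1 s u v - nu2 s u v > 0 /\
                        (nu1 s u v - nu2 s u v) * gam1 s u v * gam2 s u v <> 0).

Definition open_interval (I : R -> Prop) : Prop :=
  open I /\ (forall a b c, I a -> I c -> a <= b <= c -> I b).

Definition weingarten_data (s : surface) (D : R -> R -> Prop)
    (I : R -> Prop) (f g : R -> R) (nu : R -> R -> R) : Prop :=
  open_interval I /\
  (forall t, I t -> ex_derive f t /\ ex_derive g t /\ f t - g t > 0 /\
                    Derive f t * Derive g t <> 0) /\
  (forall u v, D u v -> I (nu u v) /\ differentiable_pt nu u v /\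
                        pu nu u v * pv nu u v <> 0 /\
                        nu1 s u v = f (nu u v) /\ nu2 s u v = g (nu u v)).

Definition strongly_regular_weingarten (s : surface) (D : R -> R -> Prop) : Prop :=
  strongly_regular_principal s D /\ exists I f g nu, weingarten_data s D I f g nu.

(** lambda and mu, given antiderivatives Phi of f'/(f-g) and Psi of g'/(g-f) *)
Definition lam (s : surface) (Phi : R -> R) (nu : R -> R -> R) : R -> R -> R :=
  fun u v => ln (sqrt (fE s u v)) + Phi (nu u v).
Definition mu (s : surface) (Psi : R -> R) (nu : R -> R -> R) : R -> R -> R :=
  fun u v => ln (sqrt (fG s u v)) + Psi (nu u v).

Definition geometric_principal (s : surface) (D : R -> R -> Prop) : Prop :=
  strongly_regular_principal s D /\
  exists I f g nu Phi Psi,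
    weingarten_data s D I f g nu /\
    (forall t, I t -> is_derive Phi t (Derive f t / (f t - g t))) /\
    (forall t, I t -> is_derive Psi t (Derive g t / (g t - f t))) /\
    exists c1 c2, forall u v, D u v -> lam s Phi nu u v = c1 /\ mu s Psi nu u v = c2.

Definition diffeo (theta eta : R -> R -> R * R) (W V : R -> R -> Prop) : Prop :=
  open2 W /\ open2 V /\
  smooth (fun a b => fst (theta a b)) W /\ smooth (fun a b => snd (theta a b)) W /\
  smooth (fun u v => fst (eta u v)) V /\ smooth (fun u v => snd (eta u v)) V /\
  (forall a b, W a b -> V (fst (theta a b)) (snd (theta a b)) /\
                        eta (fst (theta a b)) (snd (theta a b)) = (a, b)) /\
  (forall u v, V u v -> W (fst (eta u v)) (snd (eta u v)) /\
                        theta (fst (eta u v)) (snd (eta u v)) = (u, v)).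

Definition reparam (s : surface) (theta : R -> R -> R * R) : surface :=
  fun a b => s (fst (theta a b)) (snd (theta a b)).

From Pilot Require Import Defs.
From Stdlib Require Import Reals Lra Psatz ClassicalEpsilon FunctionalExtensionality Ranalysis5.
From Coquelicot Require Import Coquelicot.
Open Scope R_scope.

(* The Codazzi equations, written in principal parameters, say that
   [(ln sqrt E)_v = nu1_v / (nu2 - nu1)] and [(ln sqrt G)_u = nu2_u / (nu1 - nu2)].
   Near a point [nu1_u <> 0], so on a small square [nu2 = gp (nu1)] for a function [gp] of one
   variable, and [(id, gp, nu1)] are Weingarten data.  For these data
   [lambda = ln sqrt E + Phi (nu1)] with [Phi' = 1 / (t - gp t)], so Codazzi gives [lambda_v = 0]
   and likewise [mu_u = 0]: [lambda] depends on [u] only and [mu] on [v] only.  The change of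
   parameters [da = e^lambda du], [db = e^mu dv] keeps the parameters principal, leaves [nu1],
   [nu2], [gamma1], [gamma2] unchanged and divides [sqrt E] by [e^lambda] and [sqrt G] by [e^mu],
   so that [lambda] and [mu] vanish. *)

(** * Smooth functions of two variables *)

Section Locality.
Variable D : R -> R -> Prop.
Hypothesis HD : open2 D.
Variables f g : R -> R -> R.
Hypothesis Hfg : forall a b, D a b -> f a b = g a b.

Lemma open2_locally_2d u v : D u v -> locally_2d D u v.
Proof. intros Huv. apply locally_2d_locally, HD, Huv. Qed.

Lemma open2_locally_u u v : D u v -> locally u (fun t => D t v).
Proof. intros Huv. apply locally_2d_1d_const_y, open2_locally_2d, Huv. Qed.

Lemma open2_locally_v u v : D u v -> locally v (fun t => D u t).
Proof. intros Huv. apply locally_2d_1d_const_x, open2_locally_2d, Huv. Qed.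

Lemma pu_ext u v : D u v -> pu f u v = pu g u v.
Proof.
  intros Huv. apply Derive_ext_loc.
  generalize (open2_locally_u u v Huv). apply filter_imp. auto.
Qed.

Lemma pv_ext u v : D u v -> pv f u v = pv g u v.
Proof.
  intros Huv. apply Derive_ext_loc.
  generalize (open2_locally_v u v Huv). apply filter_imp. auto.
Qed.

Lemma continuous2_ext u v : D u v ->
  continuous (fun p : R * R => f (fst p) (snd p)) (u, v) ->
  continuous (fun p : R * R => g (fst p) (snd p)) (u, v).
Proof.
  intros Huv. apply continuous_ext_loc.
  generalize (HD (u, v) Huv). apply filter_imp. intros [a b]. apply Hfg.
Qed.

Lemma ex_derive_u_ext u v : D u v ->
  ex_derive (fun t => f t v) u -> ex_derive (fun t => g t v) u.
Proof.
  intros Huv. apply ex_derive_ext_loc.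
  generalize (open2_locally_u u v Huv). apply filter_imp. auto.
Qed.

Lemma ex_derive_v_ext u v : D u v ->
  ex_derive (fun t => f u t) v -> ex_derive (fun t => g u t) v.
Proof.
  intros Huv. apply ex_derive_ext_loc.
  generalize (open2_locally_v u v Huv). apply filter_imp. auto.
Qed.

End Locality.

Lemma open2_strip_u a b : open2 (fun u v => a < u < b).
Proof.
  apply (open_comp fst (fun u => a < u < b)).
  - intros p _. apply continuous_fst.
  - apply open_and; [apply open_gt|apply open_lt].
Qed.

Lemma open2_strip_v c d : open2 (fun u v => c < v < d).
Proof.
  apply (open_comp snd (fun v => c < v < d)).
  - intros p _. apply continuous_snd.
  - apply open_and; [apply open_gt|apply open_lt].
Qed.

Lemma open2_rect a b c d : open2 (fun u v => a < u < b /\ c < v < d).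
Proof. exact (open_and _ _ (open2_strip_u a b) (open2_strip_v c d)). Qed.

Section CkCalculus.
Variable D : R -> R -> Prop.

Lemma Ck_cont k h u v : Ck k h D -> D u v ->
  continuous (fun p : R * R => h (fst p) (snd p)) (u, v).
Proof. destruct k; intros H Huv; apply H, Huv. Qed.

Lemma Ck_exu k h u v : Ck (S k) h D -> D u v -> ex_derive (fun t => h t v) u.
Proof. intros H Huv. apply (proj1 (proj2 H) u v Huv). Qed.

Lemma Ck_exv k h u v : Ck (S k) h D -> D u v -> ex_derive (fun t => h u t) v.
Proof. intros H Huv. apply (proj1 (proj2 H) u v Huv). Qed.

Lemma Ck_pu k h : Ck (S k) h D -> Ck k (pu h) D.
Proof. intros H. apply H. Qed.

Lemma Ck_pv k h : Ck (S k) h D -> Ck k (pv h) D.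
Proof. intros H. apply H. Qed.

Lemma Ck_S k h : Ck (S k) h D -> Ck k h D.
Proof.
  revert h. induction k as [|k IH]; intros h H.
  - exact (proj1 H).
  - destruct H as (Hc & He & Hu & Hv). split; [|split; [|split]]; auto.
Qed.

Lemma Ck_const k c : Ck k (fun _ _ => c) D.
Proof.
  revert c. induction k as [|k IH]; intros c.
  - intros u v _. apply continuous_const.
  - assert (Eu : pu (fun _ _ => c) = fun _ _ => 0).
    { extensionality a; extensionality b. apply (Derive_const c). }
    assert (Ev : pv (fun _ _ => c) = fun _ _ => 0).
    { extensionality a; extensionality b. apply (Derive_const c). }
    split; [|split; [|split]].
    + intros u v _. apply continuous_const.
    + intros u v _. split; apply ex_derive_const.
    + rewrite Eu. apply IH.
    + rewrite Ev. apply IH.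
Qed.

Lemma Ck_subset k h (D' : R -> R -> Prop) :
  (forall u v, D' u v -> D u v) -> Ck k h D -> Ck k h D'.
Proof.
  intros Hsub. revert h. induction k as [|k IH]; intros h H.
  - intros u v Huv. apply H, Hsub, Huv.
  - destruct H as (Hc & He & Hu & Hv). split; [|split; [|split]].
    + intros u v Huv. apply Hc, Hsub, Huv.
    + intros u v Huv. exact (He u v (Hsub u v Huv)).
    + apply IH, Hu.
    + apply IH, Hv.
Qed.

Hypothesis HD : open2 D.

Lemma Ck_ext k f g : (forall a b, D a b -> f a b = g a b) -> Ck k f D -> Ck k g D.
Proof.
  revert f g. induction k as [|k IH]; intros f g Hfg H.
  - intros u v Huv. apply (continuous2_ext D HD f g Hfg u v Huv), H, Huv.
  - destruct H as (Hc & He & Hu & Hv). split; [|split; [|split]].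
    + intros u v Huv. apply (continuous2_ext D HD f g Hfg u v Huv), Hc, Huv.
    + intros u v Huv. split.
      * apply (ex_derive_u_ext D HD f g Hfg u v Huv), (proj1 (He u v Huv)).
      * apply (ex_derive_v_ext D HD f g Hfg u v Huv), (proj2 (He u v Huv)).
    + apply (IH (pu f)); [|exact Hu]. intros a b Hab. apply (pu_ext D HD f g Hfg a b Hab).
    + apply (IH (pv f)); [|exact Hv]. intros a b Hab. apply (pv_ext D HD f g Hfg a b Hab).
Qed.

Lemma Ck_plus k p q : Ck k p D -> Ck k q D -> Ck k (fun u v => p u v + q u v) D.
Proof.
  revert p q. induction k as [|k IH]; intros p q Hp Hq.
  - intros u v Huv. apply (continuous_plus (fun z : R * R => p (fst z) (snd z))
      (fun z : R * R => q (fst z) (snd z))); eapply Ck_cont; eassumption.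
  - split; [|split; [|split]].
    + intros u v Huv. apply (continuous_plus (fun z : R * R => p (fst z) (snd z))
        (fun z : R * R => q (fst z) (snd z))); eapply Ck_cont; eassumption.
    + intros u v Huv. destruct (proj1 (proj2 Hp) u v Huv), (proj1 (proj2 Hq) u v Huv).
      split; [apply (ex_derive_plus (fun t => p t v) (fun t => q t v))
             |apply (ex_derive_plus (fun t => p u t) (fun t => q u t))]; assumption.
    + apply Ck_ext with (fun u v => pu p u v + pu q u v).
      * intros a b Hab. symmetry.
        apply Derive_plus; [exact (Ck_exu k p a b Hp Hab)|exact (Ck_exu k q a b Hq Hab)].
      * apply IH; apply Ck_pu; assumption.
    + apply Ck_ext with (fun u v => pv p u v + pv q u v).
      * intros a b Hab. symmetry.
        apply Derive_plus; [exact (Ck_exv k p a b Hp Hab)|exact (Ck_exv k q a b Hq Hab)].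
      * apply IH; apply Ck_pv; assumption.
Qed.

Lemma Ck_opp k p : Ck k p D -> Ck k (fun u v => - p u v) D.
Proof.
  revert p. induction k as [|k IH]; intros p Hp.
  - intros u v Huv. apply (continuous_opp (fun z : R * R => p (fst z) (snd z))).
    eapply Ck_cont; eassumption.
  - split; [|split; [|split]].
    + intros u v Huv. apply (continuous_opp (fun z : R * R => p (fst z) (snd z))).
      eapply Ck_cont; eassumption.
    + intros u v Huv. destruct (proj1 (proj2 Hp) u v Huv).
      split; [apply (ex_derive_opp (fun t => p t v))|apply (ex_derive_opp (fun t => p u t))];
        assumption.
    + apply Ck_ext with (fun u v => - pu p u v).
      * intros a b Hab. symmetry. apply Derive_opp.
      * apply IH, Ck_pu, Hp.
    + apply Ck_ext with (fun u v => - pv p u v).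
      * intros a b Hab. symmetry. apply Derive_opp.
      * apply IH, Ck_pv, Hp.
Qed.

Lemma Ck_mult k p q : Ck k p D -> Ck k q D -> Ck k (fun u v => p u v * q u v) D.
Proof.
  revert p q. induction k as [|k IH]; intros p q Hp Hq.
  - intros u v Huv. apply (continuous_mult (fun z : R * R => p (fst z) (snd z))
      (fun z : R * R => q (fst z) (snd z))); eapply Ck_cont; eassumption.
  - split; [|split; [|split]].
    + intros u v Huv. apply (continuous_mult (fun z : R * R => p (fst z) (snd z))
        (fun z : R * R => q (fst z) (snd z))); eapply Ck_cont; eassumption.
    + intros u v Huv. destruct (proj1 (proj2 Hp) u v Huv), (proj1 (proj2 Hq) u v Huv).
      split; [apply (ex_derive_mult (fun t => p t v) (fun t => q t v))
             |apply (ex_derive_mult (fun t => p u t) (fun t => q u t))]; assumption.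
    + apply Ck_ext with (fun u v => pu p u v * q u v + p u v * pu q u v).
      * intros a b Hab. symmetry.
        apply Derive_mult; [exact (Ck_exu k p a b Hp Hab)|exact (Ck_exu k q a b Hq Hab)].
      * apply Ck_plus; apply IH; auto using Ck_pu, Ck_S.
    + apply Ck_ext with (fun u v => pv p u v * q u v + p u v * pv q u v).
      * intros a b Hab. symmetry.
        apply Derive_mult; [exact (Ck_exv k p a b Hp Hab)|exact (Ck_exv k q a b Hq Hab)].
      * apply Ck_plus; apply IH; auto using Ck_pv, Ck_S.
Qed.

(* [(F o h)_u = h_u * (F' o h)]; the second hypothesis, that [F' o h] inherits [Ck k] from
   [F o h], is what lets the induction on [k] go through for [inv], [sqrt], [ln], [exp]. *)
Lemma Ck_comp_1d (F F' : R -> R) (S : R -> Prop) :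
  (forall y, S y -> is_derive F y (F' y)) ->
  (forall k h, (forall u v, D u v -> S (h u v)) -> Ck k h D ->
     Ck k (fun u v => F (h u v)) D -> Ck k (fun u v => F' (h u v)) D) ->
  forall k h, (forall u v, D u v -> S (h u v)) -> Ck k h D ->
    Ck k (fun u v => F (h u v)) D.
Proof.
  intros HF HF' k. induction k as [|k IH]; intros h HS Hh;
    assert (Hc : forall u v, D u v -> continuous (fun p : R * R => F (h (fst p) (snd p))) (u, v))
      by (intros u v Huv; apply (continuous_comp (fun z : R * R => h (fst z) (snd z)) F);
          [eapply Ck_cont; eassumption
          |apply (ex_derive_continuous F); exists (F' (h u v)); apply HF, HS, Huv]).
  - exact Hc.
  - assert (IH1 : Ck k (fun u v => F (h u v)) D) by (apply IH; auto using Ck_S).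
    split; [exact Hc|split; [|split]].
    + intros u v Huv. split.
      * apply (ex_derive_comp F (fun t => h t v));
          [eexists; apply HF, HS, Huv|eapply Ck_exu; eassumption].
      * apply (ex_derive_comp F (fun t => h u t));
          [eexists; apply HF, HS, Huv|eapply Ck_exv; eassumption].
    + apply Ck_ext with (fun u v => pu h u v * F' (h u v)).
      * intros a b Hab. unfold pu. rewrite (Derive_comp F (fun t => h t b));
          [|eexists; apply HF, HS, Hab|eapply Ck_exu; eassumption].
        f_equal. symmetry. apply is_derive_unique, HF, HS, Hab.
      * apply Ck_mult; [apply Ck_pu, Hh|apply HF'; auto using Ck_S].
    + apply Ck_ext with (fun u v => pv h u v * F' (h u v)).
      * intros a b Hab. unfold pv. rewrite (Derive_comp F (fun t => h a t));
          [|eexists; apply HF, HS, Hab|eapply Ck_exv; eassumption].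
        f_equal. symmetry. apply is_derive_unique, HF, HS, Hab.
      * apply Ck_mult; [apply Ck_pv, Hh|apply HF'; auto using Ck_S].
Qed.

Lemma Ck_inv k h : (forall u v, D u v -> h u v <> 0) -> Ck k h D ->
  Ck k (fun u v => / h u v) D.
Proof.
  apply (Ck_comp_1d (fun y => / y) (fun y => - (/ y * / y)) (fun y => y <> 0)).
  - intros y Hy.
    replace (- (/ y * / y)) with (- 1 / y ^ 2) by (field; exact Hy).
    apply (is_derive_inv (fun t => t) y 1 (is_derive_id y) Hy).
  - intros k' h' _ _ Hinv. apply Ck_opp, Ck_mult; assumption.
Qed.

Lemma Ck_exp k h : Ck k h D -> Ck k (fun u v => exp (h u v)) D.
Proof.
  apply (Ck_comp_1d exp exp (fun _ => True)); auto.
  intros y _. apply is_derive_exp.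
Qed.

Lemma Ck_sqrt k h : (forall u v, D u v -> 0 < h u v) -> Ck k h D ->
  Ck k (fun u v => sqrt (h u v)) D.
Proof.
  apply (Ck_comp_1d sqrt (fun y => / 2 * / sqrt y) (fun y => 0 < y)).
  - intros y Hy.
    replace (/ 2 * / sqrt y) with (1 / (2 * sqrt y))
      by (field; apply Rgt_not_eq, sqrt_lt_R0, Hy).
    apply (is_derive_sqrt (fun t => t) y 1 (is_derive_id y) Hy).
  - intros k' h' HS _ Hsq. apply Ck_mult; [apply Ck_const|].
    apply Ck_inv; [|exact Hsq]. intros u v Huv. apply Rgt_not_eq, sqrt_lt_R0, HS, Huv.
Qed.

Lemma Ck_ln k h : (forall u v, D u v -> 0 < h u v) -> Ck k h D ->
  Ck k (fun u v => ln (h u v)) D.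
Proof.
  apply (Ck_comp_1d ln (fun y => / y) (fun y => 0 < y)).
  - intros y Hy. apply is_derive_ln, Hy.
  - intros k' h' HS Hh _. apply Ck_inv; [|exact Hh].
    intros u v Huv. apply Rgt_not_eq, HS, Huv.
Qed.

End CkCalculus.

Lemma Ck_comp_sep k h (V W : R -> R -> Prop) (al be : R -> R) :
  open2 W -> (forall a b, W a b -> V (al a) (be b)) -> Ck k h V ->
  Ck k (fun a b => al a) W -> Ck k (fun a b => be b) W ->
  Ck k (fun a b => h (al a) (be b)) W.
Proof.
  intros HW HWV. revert h. induction k as [|k IH]; intros h Hh Ha Hb;
    assert (Hc : forall a b, W a b ->
      continuous (fun p : R * R => h (al (fst p)) (be (snd p))) (a, b))
      by (intros a b Hab; apply (continuous_comp_2 (fun p : R * R => al (fst p))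
            (fun p : R * R => be (snd p)) h (a, b));
          [exact (Ck_cont _ _ _ _ _ Ha Hab)|exact (Ck_cont _ _ _ _ _ Hb Hab)
          |exact (Ck_cont _ _ _ _ _ Hh (HWV a b Hab))]).
  - exact Hc.
  - split; [exact Hc|split; [|split]].
    + intros a b Hab. split.
      * apply (ex_derive_comp (fun t => h t (be b)) al);
          [exact (Ck_exu _ _ _ _ _ Hh (HWV a b Hab))|exact (Ck_exu _ _ _ _ _ Ha Hab)].
      * apply (ex_derive_comp (fun t => h (al a) t) be);
          [exact (Ck_exv _ _ _ _ _ Hh (HWV a b Hab))|exact (Ck_exv _ _ _ _ _ Hb Hab)].
    + apply Ck_ext with (fun a b => pu (fun a b => al a) a b * pu h (al a) (be b)); [exact HW| |].
      * intros a b Hab. unfold pu. symmetry.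
        apply (Derive_comp (fun t => h t (be b)) al);
          [exact (Ck_exu _ _ _ _ _ Hh (HWV a b Hab))|exact (Ck_exu _ _ _ _ _ Ha Hab)].
      * apply Ck_mult; [exact HW|apply Ck_pu, Ha|].
        apply IH; auto using Ck_pu, Ck_S.
    + apply Ck_ext with (fun a b => pv (fun a b => be b) a b * pv h (al a) (be b)); [exact HW| |].
      * intros a b Hab. unfold pv. symmetry.
        apply (Derive_comp (fun t => h (al a) t) be);
          [exact (Ck_exv _ _ _ _ _ Hh (HWV a b Hab))|exact (Ck_exv _ _ _ _ _ Hb Hab)].
      * apply Ck_mult; [exact HW|apply Ck_pv, Hb|].
        apply IH; auto using Ck_pv, Ck_S.
Qed.

Section SmoothCalculus.
Variable D : R -> R -> Prop.

Lemma smooth_cont h u v : smooth h D -> D u v ->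
  continuous (fun p : R * R => h (fst p) (snd p)) (u, v).
Proof. intros H Huv. exact (Ck_cont D 0 h u v (H 0%nat) Huv). Qed.

Lemma smooth_exu h u v : smooth h D -> D u v -> ex_derive (fun t => h t v) u.
Proof. intros H Huv. exact (Ck_exu D 0 h u v (H 1%nat) Huv). Qed.

Lemma smooth_exv h u v : smooth h D -> D u v -> ex_derive (fun t => h u t) v.
Proof. intros H Huv. exact (Ck_exv D 0 h u v (H 1%nat) Huv). Qed.

Lemma smooth_pu h : smooth h D -> smooth (pu h) D.
Proof. intros H k. apply Ck_pu, H. Qed.

Lemma smooth_pv h : smooth h D -> smooth (pv h) D.
Proof. intros H k. apply Ck_pv, H. Qed.

Lemma smooth_const c : smooth (fun _ _ => c) D.
Proof. intros k. apply Ck_const. Qed.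

Lemma smooth_subset h (D' : R -> R -> Prop) :
  (forall u v, D' u v -> D u v) -> smooth h D -> smooth h D'.
Proof. intros Hsub H k. apply (Ck_subset D k h D' Hsub (H k)). Qed.

Hypothesis HD : open2 D.

Lemma smooth_ext f g : (forall a b, D a b -> f a b = g a b) -> smooth f D -> smooth g D.
Proof. intros Hfg H k. apply (Ck_ext D HD k f), H. exact Hfg. Qed.

Lemma smooth_plus p q : smooth p D -> smooth q D -> smooth (fun u v => p u v + q u v) D.
Proof. intros Hp Hq k. apply Ck_plus; auto. Qed.

Lemma smooth_opp p : smooth p D -> smooth (fun u v => - p u v) D.
Proof. intros Hp k. apply Ck_opp; auto. Qed.

Lemma smooth_minus p q : smooth p D -> smooth q D -> smooth (fun u v => p u v - q u v) D.
Proof. intros Hp Hq. apply smooth_plus; [exact Hp|apply smooth_opp, Hq]. Qed.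

Lemma smooth_mult p q : smooth p D -> smooth q D -> smooth (fun u v => p u v * q u v) D.
Proof. intros Hp Hq k. apply Ck_mult; auto. Qed.

Lemma smooth_inv p : (forall u v, D u v -> p u v <> 0) -> smooth p D ->
  smooth (fun u v => / p u v) D.
Proof. intros H Hp k. apply Ck_inv; auto. Qed.

Lemma smooth_div p q : (forall u v, D u v -> q u v <> 0) -> smooth p D -> smooth q D ->
  smooth (fun u v => p u v / q u v) D.
Proof. intros H Hp Hq. apply smooth_mult; [exact Hp|apply smooth_inv; assumption]. Qed.

Lemma smooth_exp p : smooth p D -> smooth (fun u v => exp (p u v)) D.
Proof. intros Hp k. apply Ck_exp; auto. Qed.

Lemma smooth_sqrt p : (forall u v, D u v -> 0 < p u v) -> smooth p D ->
  smooth (fun u v => sqrt (p u v)) D.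
Proof. intros H Hp k. apply Ck_sqrt; auto. Qed.

Lemma smooth_ln p : (forall u v, D u v -> 0 < p u v) -> smooth p D ->
  smooth (fun u v => ln (p u v)) D.
Proof. intros H Hp k. apply Ck_ln; auto. Qed.

Lemma smooth_of_partials h p q :
  (forall u v, D u v -> continuous (fun z : R * R => h (fst z) (snd z)) (u, v)) ->
  (forall u v, D u v -> ex_derive (fun t => h t v) u /\ ex_derive (fun t => h u t) v) ->
  (forall u v, D u v -> pu h u v = p u v) -> (forall u v, D u v -> pv h u v = q u v) ->
  smooth p D -> smooth q D -> smooth h D.
Proof.
  intros Hc He Hp Hq Sp Sq [|k].
  - exact Hc.
  - split; [exact Hc|split; [exact He|split]].
    + apply (Ck_ext D HD k p); [|apply Sp]. intros; symmetry; auto.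
    + apply (Ck_ext D HD k q); [|apply Sq]. intros; symmetry; auto.
Qed.

Lemma smooth_fst : smooth (fun a b => a) D.
Proof.
  apply smooth_of_partials with (fun _ _ => 1) (fun _ _ => 0).
  - intros u v _. apply continuous_fst.
  - intros u v _. split; [apply ex_derive_id|apply ex_derive_const].
  - intros u v _. unfold pu. apply Derive_id.
  - intros u v _. unfold pv. apply Derive_const.
  - apply smooth_const.
  - apply smooth_const.
Qed.

Lemma smooth_snd : smooth (fun a b => b) D.
Proof.
  apply smooth_of_partials with (fun _ _ => 0) (fun _ _ => 1).
  - intros u v _. apply continuous_snd.
  - intros u v _. split; [apply ex_derive_const|apply ex_derive_id].
  - intros u v _. unfold pu. apply Derive_const.
  - intros u v _. unfold pv. apply Derive_id.
  - apply smooth_const.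
  - apply smooth_const.
Qed.

Lemma pu_const_on f c u v : (forall a b, D a b -> f a b = c) -> D u v -> pu f u v = 0.
Proof.
  intros H Huv. rewrite (pu_ext D HD f (fun _ _ => c) H u v Huv). unfold pu. apply Derive_const.
Qed.

Lemma pv_const_on f c u v : (forall a b, D a b -> f a b = c) -> D u v -> pv f u v = 0.
Proof.
  intros H Huv. rewrite (pv_ext D HD f (fun _ _ => c) H u v Huv). unfold pv. apply Derive_const.
Qed.

End SmoothCalculus.

Lemma smooth_comp_sep h (V W : R -> R -> Prop) (al be : R -> R) :
  open2 W -> (forall a b, W a b -> V (al a) (be b)) -> smooth h V ->
  smooth (fun a b => al a) W -> smooth (fun a b => be b) W ->
  smooth (fun a b => h (al a) (be b)) W.
Proof. intros HW HWV Hh Ha Hb k. apply Ck_comp_sep with V; auto. Qed.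

Section PartialDerivatives.
Variable D : R -> R -> Prop.
Variables p q : R -> R -> R.
Hypotheses (Hp : smooth p D) (Hq : smooth q D).

Lemma pu_plus u v : D u v -> pu (fun a b => p a b + q a b) u v = pu p u v + pu q u v.
Proof.
  intros Huv. unfold pu. rewrite Derive_plus; [reflexivity| |].
  - exact (smooth_exu D p u v Hp Huv).
  - exact (smooth_exu D q u v Hq Huv).
Qed.

Lemma pv_plus u v : D u v -> pv (fun a b => p a b + q a b) u v = pv p u v + pv q u v.
Proof.
  intros Huv. unfold pv. rewrite Derive_plus; [reflexivity| |].
  - exact (smooth_exv D p u v Hp Huv).
  - exact (smooth_exv D q u v Hq Huv).
Qed.

Lemma pu_mult u v : D u v ->
  pu (fun a b => p a b * q a b) u v = pu p u v * q u v + p u v * pu q u v.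
Proof.
  intros Huv. unfold pu. rewrite Derive_mult; [reflexivity| |].
  - exact (smooth_exu D p u v Hp Huv).
  - exact (smooth_exu D q u v Hq Huv).
Qed.

Lemma pv_mult u v : D u v ->
  pv (fun a b => p a b * q a b) u v = pv p u v * q u v + p u v * pv q u v.
Proof.
  intros Huv. unfold pv. rewrite Derive_mult; [reflexivity| |].
  - exact (smooth_exv D p u v Hp Huv).
  - exact (smooth_exv D q u v Hq Huv).
Qed.

End PartialDerivatives.

Lemma pu_pv_comm h D u v : open2 D -> smooth h D -> D u v -> pu (pv h) u v = pv (pu h) u v.
Proof.
  intros HD Hh Huv. unfold pu, pv. apply Schwarz.
  - generalize (open2_locally_2d D HD u v Huv). apply locally_2d_impl, locally_2d_forall.
    intros a b Hab. split; [|split; [|split]].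
    + exact (smooth_exu D h a b Hh Hab).
    + exact (smooth_exv D h a b Hh Hab).
    + exact (smooth_exu D (pv h) a b (smooth_pv D h Hh) Hab).
    + exact (smooth_exv D (pu h) a b (smooth_pu D h Hh) Hab).
  - apply continuity_2d_pt_filterlim.
    exact (smooth_cont D (pu (pv h)) u v (smooth_pu D _ (smooth_pv D h Hh)) Huv).
  - apply continuity_2d_pt_filterlim.
    exact (smooth_cont D (pv (pu h)) u v (smooth_pv D _ (smooth_pu D h Hh)) Huv).
Qed.

Lemma Ck_ex_diff_n k h D u v : Ck k h D -> D u v -> ex_diff_n h k u v.
Proof.
  revert h. induction k as [|k IH]; intros h H Huv; simpl.
  - split; [|exact I]. apply continuity_2d_pt_filterlim, (Ck_cont D 0 h u v H Huv).
  - split; [apply continuity_2d_pt_filterlim, (Ck_cont D (S k) h u v H Huv)|].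
    split; [exact (Ck_exu D k h u v H Huv)|].
    split; [exact (Ck_exv D k h u v H Huv)|].
    split; [apply IH, Huv; apply Ck_pu, H|apply IH, Huv; apply Ck_pv, H].
Qed.

Lemma DL_pol_1 h u v du dv : DL_pol 1 h u v du dv = h u v + pu h u v * du + pv h u v * dv.
Proof.
  unfold DL_pol, differential, partial_derive, Binomial.C; simpl. unfold pu, pv. field.
Qed.

(* Taylor-Lagrange at order 1 gives a quadratic remainder, hence differentiability. *)
Lemma smooth_differentiable_pt h D u v : open2 D -> smooth h D -> D u v ->
  differentiable_pt h u v.
Proof.
  intros HD Hh Huv. exists (pu h u v), (pv h u v).
  destruct (Taylor_Lagrange_2d h 1 u v) as [C [d Hd]].
  { generalize (open2_locally_2d D HD u v Huv). apply locally_2d_impl, locally_2d_forall.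
    intros a b Hab. apply Ck_ex_diff_n with D; [apply Hh|exact Hab]. }
  intros eps.
  assert (HC1 : 0 < Rabs C + 1) by (generalize (Rabs_pos C); lra).
  assert (Hd' : 0 < Rmin d (eps / (Rabs C + 1))).
  { apply Rmin_pos; [apply cond_pos|apply Rdiv_lt_0_compat; [apply cond_pos|lra]]. }
  exists (mkposreal _ Hd'). intros a b Ha Hb. simpl in Ha, Hb.
  pose proof (Rmin_l d (eps / (Rabs C + 1))). pose proof (Rmin_r d (eps / (Rabs C + 1))).
  specialize (Hd a b ltac:(lra) ltac:(lra)). rewrite DL_pol_1 in Hd. simpl in Hd.
  set (m := Rmax (Rabs (a - u)) (Rabs (b - v))) in *.
  assert (Hm0 : 0 <= m) by (unfold m; eapply Rle_trans; [apply Rabs_pos|apply Rmax_l]).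
  assert (Hm1 : m * (Rabs C + 1) <= eps).
  { assert (Hm : m <= eps / (Rabs C + 1)) by (unfold m; apply Rmax_lub; lra).
    apply Rmult_le_compat_r with (r := Rabs C + 1) in Hm; [|lra].
    unfold Rdiv in Hm. rewrite Rmult_assoc, Rinv_l, Rmult_1_r in Hm by lra. exact Hm. }
  assert (HCm : C * (m * (m * 1)) <= (Rabs C + 1) * (m * m)).
  { rewrite Rmult_1_r. apply Rmult_le_compat_r; [nra|generalize (Rle_abs C); lra]. }
  replace (h a b - h u v - (pu h u v * (a - u) + pv h u v * (b - v)))
    with (h a b - (h u v + pu h u v * (a - u) + pv h u v * (b - v))) by ring.
  nra.
Qed.

(** * Vectors, regular surfaces and the Codazzi equations *)

Lemma vec3_eq (a b : vec3) : v1 a = v1 b -> v2 a = v2 b -> v3 a = v3 b -> a = b.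
Proof. destruct a as [[a1 a2] a3], b as [[b1 b2] b3]; unfold v1, v2, v3; simpl; congruence. Qed.

Ltac vec3_ring :=
  repeat match goal with a : vec3 |- _ => destruct a as [[? ?] ?] end;
  unfold dot, cross, vscale, v1, v2, v3; simpl; ring.

Lemma dot_comm a b : dot a b = dot b a.
Proof. vec3_ring. Qed.

Lemma dot_vscale_l s a b : dot (vscale s a) b = s * dot a b.
Proof. vec3_ring. Qed.

Lemma dot_vscale_r s a b : dot a (vscale s b) = s * dot a b.
Proof. vec3_ring. Qed.

Lemma dot_cross_l a b : dot (cross a b) a = 0.
Proof. vec3_ring. Qed.

Lemma dot_cross_r a b : dot (cross a b) b = 0.
Proof. vec3_ring. Qed.

Lemma cross_vscale s t a b : cross (vscale s a) (vscale t b) = vscale (s * t) (cross a b).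
Proof. apply vec3_eq; vec3_ring. Qed.

Lemma lagrange_identity a b : dot (cross a b) (cross a b) = dot a a * dot b b - dot a b * dot a b.
Proof. vec3_ring. Qed.

Lemma dot_self_pos a : a <> (0, 0, 0) -> 0 < dot a a.
Proof.
  destruct a as [[a1 a2] a3]. unfold dot, v1, v2, v3; simpl. intros H.
  destruct (Req_dec a1 0), (Req_dec a2 0), (Req_dec a3 0); subst;
    try (exfalso; apply H; reflexivity); nra.
Qed.

Lemma dot_self_pos_of_cross_l a b : cross a b <> (0, 0, 0) -> 0 < dot a a.
Proof.
  intros H. apply dot_self_pos. intros ->. apply H. apply vec3_eq; vec3_ring.
Qed.

Lemma dot_self_pos_of_cross_r a b : cross a b <> (0, 0, 0) -> 0 < dot b b.
Proof.
  intros H. apply dot_self_pos. intros ->. apply H. apply vec3_eq; vec3_ring.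
Qed.

Lemma vscale_neq0 s a : s <> 0 -> a <> (0, 0, 0) -> vscale s a <> (0, 0, 0).
Proof.
  destruct a as [[a1 a2] a3]. unfold vscale, v1, v2, v3; simpl. intros Hs Ha H.
  injection H as H1 H2 H3. apply Ha. f_equal; [f_equal|];
    match goal with H : s * ?c = 0 |- ?c = 0 =>
      replace c with (/ s * (s * c)) by (field; exact Hs); rewrite H; ring end.
Qed.

Lemma vnorm_vscale s a : 0 < s -> vnorm (vscale s a) = s * vnorm a.
Proof.
  intros Hs. unfold vnorm. rewrite dot_vscale_l, dot_vscale_r.
  replace (s * (s * dot a a)) with (s * s * dot a a) by ring.
  rewrite sqrt_mult_alt by nra. rewrite sqrt_square; lra.
Qed.

Lemma vnorm_pos a : a <> (0, 0, 0) -> 0 < vnorm a.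
Proof. intros H. apply sqrt_lt_R0, dot_self_pos, H. Qed.

Lemma dot_cross_mul a b w z :
  dot (cross a b) w * dot (cross a b) z =
  dot w z * (dot a a * dot b b - dot a b * dot a b) - dot b b * dot w a * dot z a
  - dot a a * dot w b * dot z b + dot a b * (dot w a * dot z b + dot w b * dot z a).
Proof. vec3_ring. Qed.

(* Parseval's identity in the orthogonal frame [a], [b], [s (a x b)] (a unit vector),
   multiplied through by [|a|^2 |b|^2]. *)
Lemma orthogonal_frame_expansion (a b w z : vec3) s :
  dot a b = 0 -> s * s * dot (cross a b) (cross a b) = 1 ->
  dot a a * dot b b * dot w z = dot b b * dot w a * dot z a + dot a a * dot w b * dot z b +
    dot a a * dot b b * (dot (vscale s (cross a b)) w * dot (vscale s (cross a b)) z).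
Proof.
  intros Hab Hs. rewrite lagrange_identity, Hab in Hs. rewrite !dot_vscale_l.
  replace (dot a a * dot b b * (s * dot (cross a b) w * (s * dot (cross a b) z)))
    with (s * s * (dot a a * dot b b - 0 * 0) * (dot (cross a b) w * dot (cross a b) z)) by ring.
  rewrite Hs, dot_cross_mul, Hab. ring.
Qed.

Definition smooth3 (X : surface) (D : R -> R -> Prop) : Prop :=
  smooth (sx X) D /\ smooth (sy X) D /\ smooth (sz X) D.

Section SmoothVectorFields.
Variable D : R -> R -> Prop.
Hypothesis HD : open2 D.

Lemma smooth3_Su X : smooth3 X D -> smooth3 (Su X) D.
Proof. intros (H1 & H2 & H3). split; [|split]; apply smooth_pu; assumption. Qed.

Lemma smooth3_Sv X : smooth3 X D -> smooth3 (Sv X) D.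
Proof. intros (H1 & H2 & H3). split; [|split]; apply smooth_pv; assumption. Qed.

Lemma smooth_dot X Y : smooth3 X D -> smooth3 Y D ->
  smooth (fun u v => dot (X u v) (Y u v)) D.
Proof.
  intros (X1 & X2 & X3) (Y1 & Y2 & Y3). unfold dot.
  repeat apply smooth_plus; try apply smooth_mult; assumption.
Qed.

Lemma smooth3_cross X Y : smooth3 X D -> smooth3 Y D ->
  smooth3 (fun u v => cross (X u v) (Y u v)) D.
Proof.
  intros (X1 & X2 & X3) (Y1 & Y2 & Y3).
  split; [|split]; apply smooth_minus; try apply smooth_mult; assumption.
Qed.

Lemma smooth3_vscale s X : smooth s D -> smooth3 X D ->
  smooth3 (fun u v => vscale (s u v) (X u v)) D.
Proof. intros Hs (X1 & X2 & X3). split; [|split]; apply smooth_mult; assumption. Qed.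

Lemma pu_dot X Y u v : smooth3 X D -> smooth3 Y D -> D u v ->
  pu (fun a b => dot (X a b) (Y a b)) u v = dot (Su X u v) (Y u v) + dot (X u v) (Su Y u v).
Proof.
  intros (X1 & X2 & X3) (Y1 & Y2 & Y3) Huv. unfold dot.
  rewrite (pu_plus D (fun a b => v1 (X a b) * v1 (Y a b) + v2 (X a b) * v2 (Y a b))
            (fun a b => v3 (X a b) * v3 (Y a b)));
    [|apply smooth_plus; try apply smooth_mult; assumption|apply smooth_mult; assumption|exact Huv].
  rewrite (pu_plus D (fun a b => v1 (X a b) * v1 (Y a b)) (fun a b => v2 (X a b) * v2 (Y a b)));
    try (apply smooth_mult; assumption); [|exact Huv].
  rewrite (pu_mult D (fun a b => v1 (X a b)) (fun a b => v1 (Y a b))),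
    (pu_mult D (fun a b => v2 (X a b)) (fun a b => v2 (Y a b))),
    (pu_mult D (fun a b => v3 (X a b)) (fun a b => v3 (Y a b))); try assumption.
  unfold Su, sx, sy, sz, v1, v2, v3; simpl. ring.
Qed.

Lemma pv_dot X Y u v : smooth3 X D -> smooth3 Y D -> D u v ->
  pv (fun a b => dot (X a b) (Y a b)) u v = dot (Sv X u v) (Y u v) + dot (X u v) (Sv Y u v).
Proof.
  intros (X1 & X2 & X3) (Y1 & Y2 & Y3) Huv. unfold dot.
  rewrite (pv_plus D (fun a b => v1 (X a b) * v1 (Y a b) + v2 (X a b) * v2 (Y a b))
            (fun a b => v3 (X a b) * v3 (Y a b)));
    [|apply smooth_plus; try apply smooth_mult; assumption|apply smooth_mult; assumption|exact Huv].
  rewrite (pv_plus D (fun a b => v1 (X a b) * v1 (Y a b)) (fun a b => v2 (X a b) * v2 (Y a b)));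
    try (apply smooth_mult; assumption); [|exact Huv].
  rewrite (pv_mult D (fun a b => v1 (X a b)) (fun a b => v1 (Y a b))),
    (pv_mult D (fun a b => v2 (X a b)) (fun a b => v2 (Y a b))),
    (pv_mult D (fun a b => v3 (X a b)) (fun a b => v3 (Y a b))); try assumption.
  unfold Sv, sx, sy, sz, v1, v2, v3; simpl. ring.
Qed.

Lemma pu_dot_const X Y c u v : smooth3 X D -> smooth3 Y D ->
  (forall a b, D a b -> dot (X a b) (Y a b) = c) -> D u v ->
  dot (Su X u v) (Y u v) + dot (X u v) (Su Y u v) = 0.
Proof.
  intros HX HY Hc Huv. rewrite <- pu_dot by assumption. exact (pu_const_on D HD _ c u v Hc Huv).
Qed.

Lemma pv_dot_const X Y c u v : smooth3 X D -> smooth3 Y D ->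
  (forall a b, D a b -> dot (X a b) (Y a b) = c) -> D u v ->
  dot (Sv X u v) (Y u v) + dot (X u v) (Sv Y u v) = 0.
Proof.
  intros HX HY Hc Huv. rewrite <- pv_dot by assumption. exact (pv_const_on D HD _ c u v Hc Huv).
Qed.

Lemma Su_Sv_comm X u v : smooth3 X D -> D u v -> Su (Sv X) u v = Sv (Su X) u v.
Proof.
  intros (H1 & H2 & H3) Huv. apply vec3_eq; unfold Su, Sv, sx, sy, sz, v1, v2, v3; simpl;
    apply (pu_pv_comm _ D); assumption.
Qed.

Lemma Sv_ext X Y u v : (forall a b, D a b -> X a b = Y a b) -> D u v -> Sv X u v = Sv Y u v.
Proof.
  intros H Huv. apply vec3_eq; unfold Sv, sx, sy, sz; simpl;
    apply (pv_ext D HD) with (2 := Huv); intros a b Hab; rewrite (H a b Hab); reflexivity.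
Qed.

End SmoothVectorFields.

Lemma inv_vnorm_sqr a : a <> (0, 0, 0) -> / vnorm a * / vnorm a * dot a a = 1.
Proof.
  intros Ha. assert (H := vnorm_pos a Ha). unfold vnorm in *.
  rewrite <- (sqrt_sqrt (dot a a)) at 3 by (apply Rlt_le, dot_self_pos, Ha).
  field. lra.
Qed.

Lemma dot_unormal_Su x u v : dot (unormal x u v) (Su x u v) = 0.
Proof. unfold unormal. rewrite dot_vscale_l, dot_cross_l. ring. Qed.

Lemma dot_unormal_Sv x u v : dot (unormal x u v) (Sv x u v) = 0.
Proof. unfold unormal. rewrite dot_vscale_l, dot_cross_r. ring. Qed.

Section RegularSurface.
Variables (x : surface) (D : R -> R -> Prop).
Hypothesis Hreg : regular_surface x D.

Let HD : open2 D := proj1 Hreg.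

Lemma smooth3_surface : smooth3 x D.
Proof. destruct (proj2 Hreg) as (H1 & H2 & H3 & _). split; [|split]; assumption. Qed.

Lemma cross_Su_Sv_neq0 u v : D u v -> cross (Su x u v) (Sv x u v) <> (0, 0, 0).
Proof. apply Hreg. Qed.

Lemma fE_pos u v : D u v -> 0 < fE x u v.
Proof. intros Huv. apply (dot_self_pos_of_cross_l _ (Sv x u v)), cross_Su_Sv_neq0, Huv. Qed.

Lemma fG_pos u v : D u v -> 0 < fG x u v.
Proof. intros Huv. apply (dot_self_pos_of_cross_r (Su x u v)), cross_Su_Sv_neq0, Huv. Qed.

Lemma dot_unormal_unormal u v : D u v -> dot (unormal x u v) (unormal x u v) = 1.
Proof.
  intros Huv. unfold unormal. rewrite dot_vscale_l, dot_vscale_r, <- Rmult_assoc.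
  apply inv_vnorm_sqr, cross_Su_Sv_neq0, Huv.
Qed.

Lemma smooth3_unormal : smooth3 (unormal x) D.
Proof.
  assert (Hc := smooth3_cross D HD (Su x) (Sv x)
                  (smooth3_Su D x smooth3_surface) (smooth3_Sv D x smooth3_surface)).
  apply (smooth3_vscale D HD (fun u v => / vnorm (cross (Su x u v) (Sv x u v))) _); [|exact Hc].
  apply smooth_inv; [exact HD| |].
  - intros u v Huv. apply Rgt_not_eq, vnorm_pos, cross_Su_Sv_neq0, Huv.
  - apply smooth_sqrt; [exact HD| |apply (smooth_dot D HD); assumption].
    intros u v Huv. apply dot_self_pos, cross_Su_Sv_neq0, Huv.
Qed.

Lemma smooth_fE : smooth (fE x) D.
Proof. apply (smooth_dot D HD); apply smooth3_Su, smooth3_surface. Qed.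

Lemma smooth_fG : smooth (fG x) D.
Proof. apply (smooth_dot D HD); apply smooth3_Sv, smooth3_surface. Qed.

Lemma smooth_fL : smooth (fL x) D.
Proof.
  apply (smooth_dot D HD); [apply smooth3_Su, smooth3_Su, smooth3_surface|apply smooth3_unormal].
Qed.

Lemma smooth_fN : smooth (fN x) D.
Proof.
  apply (smooth_dot D HD); [apply smooth3_Sv, smooth3_Sv, smooth3_surface|apply smooth3_unormal].
Qed.

Lemma smooth_nu1 : smooth (nu1 x) D.
Proof.
  apply smooth_div; [exact HD| |exact smooth_fL|exact smooth_fE].
  intros u v Huv. apply Rgt_not_eq, fE_pos, Huv.
Qed.

Lemma smooth_nu2 : smooth (nu2 x) D.
Proof.
  apply smooth_div; [exact HD| |exact smooth_fN|exact smooth_fG].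
  intros u v Huv. apply Rgt_not_eq, fG_pos, Huv.
Qed.

Lemma regular_surface_subset (D' : R -> R -> Prop) :
  open2 D' -> (forall u v, D' u v -> D u v) -> regular_surface x D'.
Proof.
  intros HD' Hsub. destruct smooth3_surface as (H1 & H2 & H3).
  split; [exact HD'|split; [|split; [|split]]]; try (eapply smooth_subset; eassumption).
  intros u v Huv. apply cross_Su_Sv_neq0, Hsub, Huv.
Qed.

End RegularSurface.

Lemma strongly_regular_principal_subset x D (D' : R -> R -> Prop) :
  strongly_regular_principal x D -> open2 D' -> (forall u v, D' u v -> D u v) ->
  strongly_regular_principal x D'.
Proof.
  intros (Hreg & HFM & Hsr) HD' Hsub. split; [apply (regular_surface_subset x D); assumption|].
  split; intros u v Huv; [apply HFM|apply Hsr]; apply Hsub, Huv.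
Qed.

Section Codazzi.
Variables (x : surface) (D : R -> R -> Prop).
Hypothesis Hreg : regular_surface x D.
Hypothesis HF : forall u v, D u v -> fF x u v = 0.
Hypothesis HM : forall u v, D u v -> fM x u v = 0.

Let HD : open2 D := proj1 Hreg.
Let Hx : smooth3 x D := smooth3_surface x D Hreg.
Let Hn : smooth3 (unormal x) D := smooth3_unormal x D Hreg.
Let Hxu : smooth3 (Su x) D := smooth3_Su D x Hx.
Let Hxv : smooth3 (Sv x) D := smooth3_Sv D x Hx.

Lemma principal_frame_expansion u v w z : D u v ->
  fE x u v * fG x u v * dot w z = fG x u v * dot w (Su x u v) * dot z (Su x u v) +
    fE x u v * dot w (Sv x u v) * dot z (Sv x u v) +
    fE x u v * fG x u v * (dot (unormal x u v) w * dot (unormal x u v) z).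
Proof.
  intros Huv. apply orthogonal_frame_expansion; [apply HF, Huv|].
  apply inv_vnorm_sqr, (cross_Su_Sv_neq0 x D Hreg), Huv.
Qed.

Lemma dot_Su_unormal_Su u v : D u v -> dot (Su (unormal x) u v) (Su x u v) = - fL x u v.
Proof.
  intros Huv. unfold fL. rewrite (dot_comm (Su (Su x) u v)).
  pose proof (pu_dot_const D HD (unormal x) (Su x) 0 u v Hn Hxu
                (fun a b _ => dot_unormal_Su x a b) Huv) as E.
  lra.
Qed.

Lemma dot_Sv_unormal_Sv u v : D u v -> dot (Sv (unormal x) u v) (Sv x u v) = - fN x u v.
Proof.
  intros Huv. unfold fN. rewrite (dot_comm (Sv (Sv x) u v)).
  pose proof (pv_dot_const D HD (unormal x) (Sv x) 0 u v Hn Hxv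
                (fun a b _ => dot_unormal_Sv x a b) Huv) as E.
  lra.
Qed.

Lemma dot_unormal_SvSu u v : D u v -> dot (unormal x u v) (Sv (Su x) u v) = 0.
Proof. intros Huv. rewrite dot_comm. apply HM, Huv. Qed.

Lemma dot_Sv_unormal_Su u v : D u v -> dot (Sv (unormal x) u v) (Su x u v) = 0.
Proof.
  intros Huv.
  pose proof (pv_dot_const D HD (unormal x) (Su x) 0 u v Hn Hxu
                (fun a b _ => dot_unormal_Su x a b) Huv) as E.
  rewrite dot_unormal_SvSu in E by exact Huv. lra.
Qed.

Lemma dot_Su_unormal_Sv u v : D u v -> dot (Su (unormal x) u v) (Sv x u v) = 0.
Proof.
  intros Huv.
  pose proof (pu_dot_const D HD (unormal x) (Sv x) 0 u v Hn Hxv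
                (fun a b _ => dot_unormal_Sv x a b) Huv) as E.
  rewrite (Su_Sv_comm D HD x u v Hx Huv), dot_unormal_SvSu in E by exact Huv. lra.
Qed.

Lemma dot_unormal_Su_unormal u v : D u v -> dot (unormal x u v) (Su (unormal x) u v) = 0.
Proof.
  intros Huv. pose proof (pu_dot_const D HD (unormal x) (unormal x) 1 u v Hn Hn
                            (dot_unormal_unormal x D Hreg) Huv) as E.
  rewrite dot_comm in E. lra.
Qed.

Lemma dot_unormal_Sv_unormal u v : D u v -> dot (unormal x u v) (Sv (unormal x) u v) = 0.
Proof.
  intros Huv. pose proof (pv_dot_const D HD (unormal x) (unormal x) 1 u v Hn Hn
                            (dot_unormal_unormal x D Hreg) Huv) as E.
  rewrite dot_comm in E. lra.
Qed.

Lemma dot_SuSu_Sv u v : D u v ->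
  dot (Su (Su x) u v) (Sv x u v) = - dot (Sv (Su x) u v) (Su x u v).
Proof.
  intros Huv. pose proof (pu_dot_const D HD (Su x) (Sv x) 0 u v Hxu Hxv HF Huv) as E.
  rewrite (Su_Sv_comm D HD x u v Hx Huv), (dot_comm (Su x u v)) in E. lra.
Qed.

Lemma dot_SvSv_Su u v : D u v ->
  dot (Sv (Sv x) u v) (Su x u v) = - dot (Sv (Su x) u v) (Sv x u v).
Proof.
  intros Huv. pose proof (pv_dot_const D HD (Su x) (Sv x) 0 u v Hxu Hxv HF Huv) as E.
  rewrite (dot_comm (Su x u v)) in E. lra.
Qed.

Lemma pv_fE u v : D u v -> pv (fE x) u v = 2 * dot (Sv (Su x) u v) (Su x u v).
Proof.
  intros Huv. unfold fE. rewrite (pv_dot D HD) by assumption.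
  rewrite (dot_comm (Su x u v)). ring.
Qed.

Lemma pu_fG u v : D u v -> pu (fG x) u v = 2 * dot (Sv (Su x) u v) (Sv x u v).
Proof.
  intros Huv. unfold fG. rewrite (pu_dot D HD), (Su_Sv_comm D HD x u v Hx Huv) by assumption.
  rewrite (dot_comm (Sv x u v)). ring.
Qed.

Lemma pv_fL u v : D u v -> pv (fL x) u v =
  - dot (Sv (Su x) u v) (Su (unormal x) u v) + dot (Su (Su x) u v) (Sv (unormal x) u v).
Proof.
  intros Huv. unfold fL. rewrite (pv_dot D HD) by (try apply smooth3_Su; assumption).
  pose proof (pu_dot_const D HD (Sv (Su x)) (unormal x) 0 u v (smooth3_Sv D _ Hxu) Hn HM Huv)
    as E.
  rewrite (Su_Sv_comm D HD (Su x) u v Hxu Huv) in E. lra.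
Qed.

Lemma pu_fN u v : D u v -> pu (fN x) u v =
  - dot (Sv (Su x) u v) (Sv (unormal x) u v) + dot (Sv (Sv x) u v) (Su (unormal x) u v).
Proof.
  intros Huv. unfold fN. rewrite (pu_dot D HD) by (try apply smooth3_Sv; assumption).
  pose proof (pv_dot_const D HD (Sv (Su x)) (unormal x) 0 u v (smooth3_Sv D _ Hxu) Hn HM Huv)
    as E.
  assert (Hs : Su (Sv (Sv x)) u v = Sv (Sv (Su x)) u v).
  { rewrite (Su_Sv_comm D HD (Sv x) u v Hxv Huv).
    apply (Sv_ext D HD); [|exact Huv]. intros a b Hab. apply (Su_Sv_comm D HD x a b Hx Hab). }
  rewrite Hs. lra.
Qed.

Lemma codazzi_L u v : D u v ->
  fE x u v * fG x u v * pv (fL x) u v =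
  fG x u v * (pv (fE x) u v / 2) * fL x u v + fE x u v * (pv (fE x) u v / 2) * fN x u v.
Proof.
  intros Huv. rewrite pv_fL, pv_fE by exact Huv.
  pose proof (principal_frame_expansion u v (Sv (Su x) u v) (Su (unormal x) u v) Huv) as P1.
  pose proof (principal_frame_expansion u v (Su (Su x) u v) (Sv (unormal x) u v) Huv) as P2.
  rewrite dot_Su_unormal_Su, dot_Su_unormal_Sv, dot_unormal_Su_unormal, dot_unormal_SvSu in P1
    by exact Huv.
  rewrite dot_Sv_unormal_Su, dot_Sv_unormal_Sv, dot_unormal_Sv_unormal, dot_SuSu_Sv in P2
    by exact Huv.
  nra.
Qed.

Lemma codazzi_N u v : D u v ->
  fE x u v * fG x u v * pu (fN x) u v =
  fE x u v * (pu (fG x) u v / 2) * fN x u v + fG x u v * (pu (fG x) u v / 2) * fL x u v.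
Proof.
  intros Huv. rewrite pu_fN, pu_fG by exact Huv.
  pose proof (principal_frame_expansion u v (Sv (Su x) u v) (Sv (unormal x) u v) Huv) as P1.
  pose proof (principal_frame_expansion u v (Sv (Sv x) u v) (Su (unormal x) u v) Huv) as P2.
  rewrite dot_Sv_unormal_Su, dot_Sv_unormal_Sv, dot_unormal_Sv_unormal, dot_unormal_SvSu in P1
    by exact Huv.
  rewrite dot_Su_unormal_Su, dot_Su_unormal_Sv, dot_unormal_Su_unormal, dot_SvSv_Su in P2
    by exact Huv.
  nra.
Qed.

End Codazzi.

(** * Separable changes of parameters *)

Definition vadd (a b : vec3) : vec3 := (v1 a + v1 b, v2 a + v2 b, v3 a + v3 b).

Lemma dot_vadd_l a b w : dot (vadd a b) w = dot a w + dot b w.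
Proof. unfold vadd. vec3_ring. Qed.

Lemma pv_of_fun_u (p : R -> R) a b : pv (fun a _ => p a) a b = 0.
Proof. apply (Derive_const (p a)). Qed.

Lemma pu_of_fun_v (p : R -> R) a b : pu (fun _ b => p b) a b = 0.
Proof. apply (Derive_const (p b)). Qed.

Lemma sqrt_sqr_mult s t : 0 < s -> 0 <= t -> sqrt (s * s * t) = s * sqrt t.
Proof. intros Hs Ht. rewrite sqrt_mult_alt by nra. rewrite sqrt_square; lra. Qed.

Section SeparableReparametrization.
Variables (x : surface) (V W : R -> R -> Prop) (al be : R -> R).
Hypothesis HW : open2 W.
Hypothesis HWV : forall a b, W a b -> V (al a) (be b).
Hypothesis Hal : smooth (fun a b => al a) W.
Hypothesis Hbe : smooth (fun a b => be b) W.
Hypothesis Hal_pos : forall a b, W a b -> 0 < Derive al a.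
Hypothesis Hbe_pos : forall a b, W a b -> 0 < Derive be b.
Hypothesis Hreg : regular_surface x V.

Let y := reparam x (fun a b => (al a, be b)).
Let Hx := smooth3_surface x V Hreg.
Let Hdal : smooth (fun a b => Derive al a) W := smooth_pu W _ Hal.
Let Hdbe : smooth (fun a b => Derive be b) W := smooth_pv W _ Hbe.

Lemma pu_comp_sep h a b : smooth h V -> W a b ->
  pu (fun a b => h (al a) (be b)) a b = Derive al a * pu h (al a) (be b).
Proof.
  intros Hh Hab. unfold pu. rewrite (Derive_comp (fun t => h t (be b)) al); [reflexivity| |].
  - exact (smooth_exu V h _ _ Hh (HWV a b Hab)).
  - exact (smooth_exu W _ a b Hal Hab).
Qed.

Lemma pv_comp_sep h a b : smooth h V -> W a b ->
  pv (fun a b => h (al a) (be b)) a b = Derive be b * pv h (al a) (be b).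
Proof.
  intros Hh Hab. unfold pv. rewrite (Derive_comp (fun t => h (al a) t) be); [reflexivity| |].
  - exact (smooth_exv V h _ _ Hh (HWV a b Hab)).
  - exact (smooth_exv W _ a b Hbe Hab).
Qed.

Lemma smooth_comp_reparam h : smooth h V -> smooth (fun a b => h (al a) (be b)) W.
Proof. intros Hh. apply smooth_comp_sep with V; assumption. Qed.

Lemma pu_mult_comp_sep p h a b : smooth p W -> smooth h V -> W a b ->
  pu (fun a b => p a b * h (al a) (be b)) a b =
  pu p a b * h (al a) (be b) + p a b * (Derive al a * pu h (al a) (be b)).
Proof.
  intros Hp Hh Hab. rewrite (pu_mult W p (fun a b => h (al a) (be b)));
    [|assumption|apply smooth_comp_reparam; assumption|assumption].
  rewrite pu_comp_sep by assumption. reflexivity.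
Qed.

Lemma pv_mult_comp_sep p h a b : smooth p W -> smooth h V -> W a b ->
  pv (fun a b => p a b * h (al a) (be b)) a b =
  pv p a b * h (al a) (be b) + p a b * (Derive be b * pv h (al a) (be b)).
Proof.
  intros Hp Hh Hab. rewrite (pv_mult W p (fun a b => h (al a) (be b)));
    [|assumption|apply smooth_comp_reparam; assumption|assumption].
  rewrite pv_comp_sep by assumption. reflexivity.
Qed.

Lemma pu_pu_comp_sep h a b : smooth h V -> W a b ->
  pu (pu (fun a b => h (al a) (be b))) a b =
  Derive (Derive al) a * pu h (al a) (be b) +
  Derive al a * Derive al a * pu (pu h) (al a) (be b).
Proof.
  intros Hh Hab.
  rewrite (pu_ext W HW _ (fun a b => Derive al a * pu h (al a) (be b))) by
    (try (intros; apply pu_comp_sep); assumption).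
  rewrite (pu_mult_comp_sep (fun a b => Derive al a)) by (try apply smooth_pu; assumption).
  change (pu (fun a b => Derive al a) a b) with (Derive (Derive al) a). ring.
Qed.

Lemma pv_pu_comp_sep h a b : smooth h V -> W a b ->
  pv (pu (fun a b => h (al a) (be b))) a b =
  Derive al a * Derive be b * pv (pu h) (al a) (be b).
Proof.
  intros Hh Hab.
  rewrite (pv_ext W HW _ (fun a b => Derive al a * pu h (al a) (be b))) by
    (try (intros; apply pu_comp_sep); assumption).
  rewrite (pv_mult_comp_sep (fun a b => Derive al a)) by (try apply smooth_pu; assumption).
  rewrite pv_of_fun_u. ring.
Qed.

Lemma pv_pv_comp_sep h a b : smooth h V -> W a b ->
  pv (pv (fun a b => h (al a) (be b))) a b =
  Derive (Derive be) b * pv h (al a) (be b) +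
  Derive be b * Derive be b * pv (pv h) (al a) (be b).
Proof.
  intros Hh Hab.
  rewrite (pv_ext W HW _ (fun a b => Derive be b * pv h (al a) (be b))) by
    (try (intros; apply pv_comp_sep); assumption).
  rewrite (pv_mult_comp_sep (fun a b => Derive be b)) by (try apply smooth_pv; assumption).
  change (pv (fun a b => Derive be b) a b) with (Derive (Derive be) b). ring.
Qed.

Ltac reparam_components lem Hab :=
  let Hx1 := fresh in let Hx2 := fresh in let Hx3 := fresh in
  destruct Hx as (Hx1 & Hx2 & Hx3);
  apply vec3_eq; unfold Su, Sv, vadd, vscale, v1, v2, v3; simpl;
  [exact (lem (sx x) _ _ Hx1 Hab) | exact (lem (sy x) _ _ Hx2 Hab)
  |exact (lem (sz x) _ _ Hx3 Hab)].

Lemma Su_reparam a b : W a b -> Su y a b = vscale (Derive al a) (Su x (al a) (be b)).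
Proof. intros Hab. reparam_components pu_comp_sep Hab. Qed.

Lemma Sv_reparam a b : W a b -> Sv y a b = vscale (Derive be b) (Sv x (al a) (be b)).
Proof. intros Hab. reparam_components pv_comp_sep Hab. Qed.

Lemma SuSu_reparam a b : W a b -> Su (Su y) a b =
  vadd (vscale (Derive (Derive al) a) (Su x (al a) (be b)))
       (vscale (Derive al a * Derive al a) (Su (Su x) (al a) (be b))).
Proof. intros Hab. reparam_components pu_pu_comp_sep Hab. Qed.

Lemma SvSu_reparam a b : W a b ->
  Sv (Su y) a b = vscale (Derive al a * Derive be b) (Sv (Su x) (al a) (be b)).
Proof. intros Hab. reparam_components pv_pu_comp_sep Hab. Qed.

Lemma SvSv_reparam a b : W a b -> Sv (Sv y) a b =
  vadd (vscale (Derive (Derive be) b) (Sv x (al a) (be b)))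
       (vscale (Derive be b * Derive be b) (Sv (Sv x) (al a) (be b))).
Proof. intros Hab. reparam_components pv_pv_comp_sep Hab. Qed.

Lemma unormal_reparam a b : W a b -> unormal y a b = unormal x (al a) (be b).
Proof.
  intros Hab. unfold unormal. rewrite Su_reparam, Sv_reparam, cross_vscale by exact Hab.
  assert (Hs : 0 < Derive al a * Derive be b) by (apply Rmult_lt_0_compat; eauto).
  assert (Hc := cross_Su_Sv_neq0 x V Hreg _ _ (HWV a b Hab)).
  rewrite vnorm_vscale by exact Hs.
  assert (Hn := vnorm_pos _ Hc).
  set (s := Derive al a * Derive be b) in *.
  destruct (cross (Su x (al a) (be b)) (Sv x (al a) (be b))) as [[c1 c2] c3].
  apply vec3_eq; unfold vscale, v1, v2, v3; simpl; field; lra.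
Qed.

Lemma fE_reparam a b : W a b -> fE y a b = Derive al a * Derive al a * fE x (al a) (be b).
Proof.
  intros Hab. unfold fE. rewrite Su_reparam, dot_vscale_l, dot_vscale_r by exact Hab. ring.
Qed.

Lemma fF_reparam a b : W a b -> fF y a b = Derive al a * Derive be b * fF x (al a) (be b).
Proof.
  intros Hab. unfold fF. rewrite Su_reparam, Sv_reparam, dot_vscale_l, dot_vscale_r by exact Hab.
  ring.
Qed.

Lemma fG_reparam a b : W a b -> fG y a b = Derive be b * Derive be b * fG x (al a) (be b).
Proof.
  intros Hab. unfold fG. rewrite Sv_reparam, dot_vscale_l, dot_vscale_r by exact Hab. ring.
Qed.

Lemma fL_reparam a b : W a b -> fL y a b = Derive al a * Derive al a * fL x (al a) (be b).
Proof.
  intros Hab. unfold fL. rewrite SuSu_reparam, unormal_reparam, dot_vadd_l, !dot_vscale_l,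
    (dot_comm (Su x _ _)), dot_unormal_Su by exact Hab.
  ring.
Qed.

Lemma fM_reparam a b : W a b -> fM y a b = Derive al a * Derive be b * fM x (al a) (be b).
Proof.
  intros Hab. unfold fM. rewrite SvSu_reparam, unormal_reparam, dot_vscale_l by exact Hab. ring.
Qed.

Lemma fN_reparam a b : W a b -> fN y a b = Derive be b * Derive be b * fN x (al a) (be b).
Proof.
  intros Hab. unfold fN. rewrite SvSv_reparam, unormal_reparam, dot_vadd_l, !dot_vscale_l,
    (dot_comm (Sv x _ _)), dot_unormal_Sv by exact Hab.
  ring.
Qed.

Lemma pv_fE_reparam a b : W a b ->
  pv (fE y) a b = Derive al a * Derive al a * (Derive be b * pv (fE x) (al a) (be b)).
Proof.
  intros Hab.
  rewrite (pv_ext W HW _ (fun a b => (Derive al a * Derive al a) * fE x (al a) (be b)))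
    by (try (intros; apply fE_reparam); assumption).
  rewrite (pv_mult_comp_sep (fun a b => Derive al a * Derive al a))
    by (try apply smooth_mult; try apply (smooth_fE x V); assumption).
  rewrite pv_of_fun_u. ring.
Qed.

Lemma pu_fG_reparam a b : W a b ->
  pu (fG y) a b = Derive be b * Derive be b * (Derive al a * pu (fG x) (al a) (be b)).
Proof.
  intros Hab.
  rewrite (pu_ext W HW _ (fun a b => (Derive be b * Derive be b) * fG x (al a) (be b)))
    by (try (intros; apply fG_reparam); assumption).
  rewrite (pu_mult_comp_sep (fun a b => Derive be b * Derive be b))
    by (try apply smooth_mult; try apply (smooth_fG x V); assumption).
  rewrite pu_of_fun_v. ring.
Qed.

Lemma nu1_reparam a b : W a b -> nu1 y a b = nu1 x (al a) (be b).
Proof.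
  intros Hab. unfold nu1. rewrite fL_reparam, fE_reparam by exact Hab.
  assert (h1 := Hal_pos a b Hab). assert (h2 := fE_pos x V Hreg _ _ (HWV a b Hab)).
  field. split; lra.
Qed.

Lemma nu2_reparam a b : W a b -> nu2 y a b = nu2 x (al a) (be b).
Proof.
  intros Hab. unfold nu2. rewrite fN_reparam, fG_reparam by exact Hab.
  assert (h1 := Hbe_pos a b Hab). assert (h2 := fG_pos x V Hreg _ _ (HWV a b Hab)).
  field. split; lra.
Qed.

Lemma gam1_reparam a b : W a b -> gam1 y a b = gam1 x (al a) (be b).
Proof.
  intros Hab. unfold gam1. rewrite pv_fE_reparam, fE_reparam, fG_reparam by exact Hab.
  assert (h1 := Hal_pos a b Hab). assert (h2 := Hbe_pos a b Hab).
  assert (h3 := fE_pos x V Hreg _ _ (HWV a b Hab)).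
  assert (h4 := fG_pos x V Hreg _ _ (HWV a b Hab)).
  rewrite sqrt_sqr_mult by lra.
  assert (0 < sqrt (fG x (al a) (be b))) by (apply sqrt_lt_R0; lra).
  field. repeat split; lra.
Qed.

Lemma gam2_reparam a b : W a b -> gam2 y a b = gam2 x (al a) (be b).
Proof.
  intros Hab. unfold gam2. rewrite pu_fG_reparam, fE_reparam, fG_reparam by exact Hab.
  assert (h1 := Hal_pos a b Hab). assert (h2 := Hbe_pos a b Hab).
  assert (h3 := fE_pos x V Hreg _ _ (HWV a b Hab)).
  assert (h4 := fG_pos x V Hreg _ _ (HWV a b Hab)).
  rewrite sqrt_sqr_mult by lra.
  assert (0 < sqrt (fE x (al a) (be b))) by (apply sqrt_lt_R0; lra).
  field. repeat split; lra.
Qed.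

Lemma regular_surface_reparam : regular_surface y W.
Proof.
  destruct Hx as (Hx1 & Hx2 & Hx3).
  split; [exact HW|split; [|split; [|split]]].
  - exact (smooth_comp_reparam (sx x) Hx1).
  - exact (smooth_comp_reparam (sy x) Hx2).
  - exact (smooth_comp_reparam (sz x) Hx3).
  - intros a b Hab. rewrite Su_reparam, Sv_reparam, cross_vscale by exact Hab.
    apply vscale_neq0.
    + apply Rgt_not_eq, Rmult_lt_0_compat; eauto.
    + apply (cross_Su_Sv_neq0 x V Hreg), HWV, Hab.
Qed.

Lemma strongly_regular_principal_reparam :
  strongly_regular_principal x V -> strongly_regular_principal y W.
Proof.
  intros (_ & HFM & Hsr). split; [exact regular_surface_reparam|split].
  - intros a b Hab. rewrite fF_reparam, fM_reparam by exact Hab.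
    destruct (HFM _ _ (HWV a b Hab)) as [-> ->]. split; ring.
  - intros a b Hab. rewrite nu1_reparam, nu2_reparam, gam1_reparam, gam2_reparam by exact Hab.
    apply Hsr, HWV, Hab.
Qed.

End SeparableReparametrization.

(** * Functions of one variable *)

Lemma is_derive_continuity_pt (f : R -> R) x l : is_derive f x l -> continuity_pt f x.
Proof.
  intros H. apply continuity_pt_filterlim, (ex_derive_continuous f). exists l; exact H.
Qed.

Lemma eq_of_derive_0 (F : R -> R) a b :
  (forall t, Rmin a b <= t <= Rmax a b -> is_derive F t 0) -> F a = F b.
Proof.
  intros H. destruct (MVT_gen F a b (fun _ => 0)) as [c [_ Heq]].
  - intros z Hz. apply H. lra.
  - intros z Hz. apply is_derive_continuity_pt with 0, H, Hz.
  - lra.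
Qed.

Lemma injective_of_derive_neq0 (J : R -> Prop) (f : R -> R) : Defs.open_interval J ->
  (forall t, J t -> ex_derive f t /\ Derive f t <> 0) ->
  forall a b, J a -> J b -> f a = f b -> a = b.
Proof.
  intros [_ HJ] Hf a b Ha Hb Hab.
  assert (Hin : forall z, Rmin a b <= z <= Rmax a b -> J z).
  { intros z Hz. destruct (Rle_dec a b).
    - rewrite Rmin_left, Rmax_right in Hz by lra. apply HJ with a b; auto.
    - rewrite Rmin_right, Rmax_left in Hz by lra. apply HJ with b a; auto. }
  destruct (Req_dec a b) as [e|ne]; [exact e|exfalso].
  destruct (MVT_gen f a b (Derive f)) as [c [Hc Heq]].
  - intros z Hz. apply Derive_correct, Hf, Hin. lra.
  - intros z Hz. apply is_derive_continuity_pt with (Derive f z), Derive_correct, Hf, Hin, Hz.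
  - destruct (Hf c (Hin c Hc)) as [_ Hne]. rewrite Hab in Heq.
    assert (Hc0 : Derive f c * (b - a) = 0) by lra.
    apply Rmult_integral in Hc0 as [Hc0|Hc0]; [exact (Hne Hc0)|lra].
Qed.

Section IncreasingFunction.
Variables (phi dphi : R -> R) (p q : R).
Hypothesis Hpq : p < q.
Hypothesis Hderive : forall t, p <= t <= q -> is_derive phi t (dphi t).
Hypothesis Hpos : forall t, p <= t <= q -> 0 < dphi t.

Lemma increasing_of_derive_pos t1 t2 : p <= t1 -> t1 < t2 -> t2 <= q -> phi t1 < phi t2.
Proof.
  intros H1 H2 H3. destruct (MVT_gen phi t1 t2 dphi) as [c [Hc Heq]].
  - intros z Hz. apply Hderive. rewrite Rmin_left, Rmax_right in Hz by lra. lra.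
  - intros z Hz. rewrite Rmin_left, Rmax_right in Hz by lra.
    apply is_derive_continuity_pt with (dphi z), Hderive. lra.
  - rewrite Rmin_left, Rmax_right in Hc by lra.
    assert (0 < dphi c) by (apply Hpos; lra). nra.
Qed.

Lemma nondecreasing_of_derive_pos t1 t2 : p <= t1 -> t1 <= t2 -> t2 <= q -> phi t1 <= phi t2.
Proof.
  intros H1 H2 H3. destruct (Req_dec t1 t2) as [->|Hne]; [lra|].
  apply Rlt_le, increasing_of_derive_pos; lra.
Qed.

Let Hcont t : p <= t <= q -> continuity_pt phi t.
Proof. intros Ht. apply is_derive_continuity_pt with (dphi t), Hderive, Ht. Qed.

Lemma increasing_le_of_values t1 t2 :
  p <= t1 <= q -> p <= t2 <= q -> phi t1 <= phi t2 -> t1 <= t2.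
Proof.
  intros H1 H2 H. destruct (Rle_dec t1 t2) as [h|h]; [exact h|].
  assert (phi t2 < phi t1) by (apply increasing_of_derive_pos; lra). lra.
Qed.

(* The inverse is chosen by [epsilon]; the intermediate value theorem makes the choice
   possible on [[phi p, phi q]]. *)
Definition increasing_inverse (s : R) : R :=
  epsilon (inhabits 0) (fun t => p <= t <= q /\ phi t = s).

Lemma increasing_inverse_spec s : phi p <= s <= phi q ->
  p <= increasing_inverse s <= q /\ phi (increasing_inverse s) = s.
Proof.
  intros Hs. unfold increasing_inverse. apply epsilon_spec.
  destruct (f_interv_is_interv phi p q s Hpq Hs Hcont) as [t Ht]. exists t; exact Ht.
Qed.

Lemma increasing_inverse_phi t : p <= t <= q -> increasing_inverse (phi t) = t.
Proof.
  intros Ht.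
  assert (Hr : phi p <= phi t <= phi q) by (split; apply nondecreasing_of_derive_pos; lra).
  destruct (increasing_inverse_spec _ Hr) as [H1 H2].
  apply Rle_antisym; apply increasing_le_of_values; lra.
Qed.

Lemma increasing_inverse_interior s : phi p < s < phi q ->
  p < increasing_inverse s < q.
Proof.
  intros Hs. destruct (increasing_inverse_spec s ltac:(lra)) as [H1 H2].
  split; apply Rnot_le_lt; intros H;
    [assert (e : increasing_inverse s = p) by lra|assert (e : increasing_inverse s = q) by lra];
    rewrite e in H2; lra.
Qed.

Lemma is_derive_increasing_inverse s : phi p < s < phi q ->
  is_derive increasing_inverse s (/ dphi (increasing_inverse s)).
Proof.
  intros Hs.
  assert (Hpsi := increasing_inverse_spec). assert (Hin := increasing_inverse_interior s Hs).
  set (lb := (phi p + s) / 2). set (ub := (s + phi q) / 2).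
  assert (Hlb : phi p < lb < s) by (unfold lb; lra).
  assert (Hub : s < ub < phi q) by (unfold ub; lra).
  destruct (Hpsi lb ltac:(lra)) as [Hl1 Hl2].
  destruct (Hpsi ub ltac:(lra)) as [Hu1 Hu2].
  destruct (Hpsi s ltac:(lra)) as [Hs1 Hs2].
  set (psi := increasing_inverse) in *.
  assert (Hcg : continuity_pt psi s).
  { apply (continuity_pt_recip_interv phi psi p q Hpq); try lra.
    - intros; apply increasing_of_derive_pos; assumption.
    - intros z Hz1 Hz2. unfold comp, id. apply Hpsi; lra.
    - intros z Hz1 Hz2. apply Hpsi; lra.
    - exact Hcont. }
  assert (Hord : psi lb <= psi s <= psi ub).
  { split; apply increasing_le_of_values; try assumption; rewrite ?Hl2, ?Hs2, ?Hu2; lra. }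
  assert (Hdpos : 0 < dphi (psi s)) by (apply Hpos; lra).
  assert (Prf : forall a, psi lb <= a <= psi ub -> derivable_pt phi a).
  { intros a Ha. apply ex_derive_Reals_0. exists (dphi a). apply Hderive. lra. }
  assert (Hl := derivable_pt_lim_recip_interv phi psi lb ub s Prf Hcg
                  ltac:(lra) ltac:(lra) Hord).
  rewrite (Derive_Reals phi (psi s)), (is_derive_unique phi (psi s) (dphi (psi s)))
    in Hl by (apply Hderive; lra).
  apply is_derive_Reals.
  replace (/ dphi (psi s)) with (1 / dphi (psi s)) by (field; lra).
  apply Hl; [|lra].
  intros z Hz. unfold comp, id. apply Hpsi. lra.
Qed.

End IncreasingFunction.

Lemma is_derive_RInt_interval (k : R -> R) c lo hi : lo < c < hi ->
  (forall t, lo < t < hi -> continuous k t) ->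
  forall s, lo < s < hi -> is_derive (fun s => RInt k c s) s (k s).
Proof.
  intros Hc Hk s Hs. apply (is_derive_RInt k (fun s => RInt k c s) c s); [|apply Hk, Hs].
  apply locally_interval with (Finite lo) (Finite hi); simpl; try lra.
  intros y Hy1 Hy2. apply (RInt_correct (V := R_CompleteNormedModule)).
  apply (ex_RInt_continuous (V := R_CompleteNormedModule)).
  intros z Hz. apply Hk. split.
  - eapply Rlt_le_trans; [|apply Hz]. apply Rmin_glb_lt; lra.
  - eapply Rle_lt_trans; [apply Hz|]. apply Rmax_lub_lt; lra.
Qed.

Lemma is_derive_ln_sqrt (h : R -> R) x dh : is_derive h x dh -> 0 < h x ->
  is_derive (fun t => ln (sqrt (h t))) x (dh / (2 * h x)).
Proof.
  intros Hd Hp. assert (Hs : 0 < sqrt (h x)) by (apply sqrt_lt_R0, Hp).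
  replace (dh / (2 * h x)) with (dh / (2 * sqrt (h x)) * / sqrt (h x)).
  - apply (is_derive_comp ln (fun t => sqrt (h t))).
    + apply is_derive_ln, Hs.
    + apply (is_derive_sqrt h x dh Hd Hp).
  - rewrite <- (sqrt_sqrt (h x)) at 3 by lra. field. lra.
Qed.

Lemma differentiable_pt_partials (h : R -> R -> R) u v : differentiable_pt h u v ->
  ex_derive (fun t => h t v) u /\ ex_derive (fun t => h u t) v.
Proof.
  intros [lx [ly H]]. split.
  - exists (lx * 1 + ly * 0). apply is_derive_Reals.
    apply (derivable_pt_lim_comp_2d h (fun t => t) (fun _ => v) u lx ly 1 0); [exact H| |].
    + apply derivable_pt_lim_id.
    + apply derivable_pt_lim_const.
  - exists (lx * 0 + ly * 1). apply is_derive_Reals.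
    apply (derivable_pt_lim_comp_2d h (fun _ => u) (fun t => t) v lx ly 0 1); [exact H| |].
    + apply derivable_pt_lim_const.
    + apply derivable_pt_lim_id.
Qed.

(** * Weingarten surfaces: [nu2] as a function of [nu1] *)

Definition square (u0 v0 r u v : R) : Prop := u0 - r < u < u0 + r /\ v0 - r < v < v0 + r.

Lemma open2_square u0 v0 r : open2 (square u0 v0 r).
Proof. apply open2_rect. Qed.

(* On the square [nu2 = gp o nu1], so that [(id, gp, nu1)] are Weingarten data there. *)
Definition nu2_function_of_nu1 (x : surface) (D : R -> R -> Prop) (u0 v0 rho c dl : R)
    (gp : R -> R) : Prop :=
  0 < rho /\ 0 < dl /\
  (forall u v, square u0 v0 rho u v ->
     D u v /\ c - dl < nu1 x u v < c + dl /\ nu2 x u v = gp (nu1 x u v)) /\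
  (forall s, c - dl < s < c + dl -> ex_derive gp s /\ Derive gp s <> 0 /\ gp s < s).

Section WeingartenSurface.
Variables (x : surface) (D : R -> R -> Prop) (I : R -> Prop) (f g : R -> R) (nu : R -> R -> R).
Hypothesis Hsrp : strongly_regular_principal x D.
Hypothesis Hwd : weingarten_data x D I f g nu.

Let HD : open2 D := proj1 (proj1 Hsrp).

Lemma pu_nu1_chain u v : D u v -> pu (nu1 x) u v = pu nu u v * Derive f (nu u v).
Proof.
  intros Huv. destruct Hwd as (_ & HI & Hnu).
  rewrite (pu_ext D HD (nu1 x) (fun a b => f (nu a b))) by (try apply Hnu; assumption).
  destruct (Hnu u v Huv) as (Iu & Hdiff & _). apply (Derive_comp f (fun t => nu t v) u).
  - apply HI, Iu.
  - exact (proj1 (differentiable_pt_partials nu u v Hdiff)).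
Qed.

Lemma pv_nu1_chain u v : D u v -> pv (nu1 x) u v = pv nu u v * Derive f (nu u v).
Proof.
  intros Huv. destruct Hwd as (_ & HI & Hnu).
  rewrite (pv_ext D HD (nu1 x) (fun a b => f (nu a b))) by (try apply Hnu; assumption).
  destruct (Hnu u v Huv) as (Iu & Hdiff & _). apply (Derive_comp f (fun t => nu u t) v).
  - apply HI, Iu.
  - exact (proj2 (differentiable_pt_partials nu u v Hdiff)).
Qed.

Lemma pu_nu2_chain u v : D u v -> pu (nu2 x) u v = pu nu u v * Derive g (nu u v).
Proof.
  intros Huv. destruct Hwd as (_ & HI & Hnu).
  rewrite (pu_ext D HD (nu2 x) (fun a b => g (nu a b))) by (try apply Hnu; assumption).
  destruct (Hnu u v Huv) as (Iu & Hdiff & _). apply (Derive_comp g (fun t => nu t v) u).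
  - apply HI, Iu.
  - exact (proj1 (differentiable_pt_partials nu u v Hdiff)).
Qed.

Lemma partials_nu_f_g_neq0 u v : D u v ->
  pu nu u v <> 0 /\ pv nu u v <> 0 /\ Derive f (nu u v) <> 0 /\ Derive g (nu u v) <> 0.
Proof.
  intros Huv. destruct Hwd as (_ & HI & Hnu). destruct (Hnu u v Huv) as (Iu & _ & Hp & _).
  destruct (HI _ Iu) as (_ & _ & _ & Hfg).
  repeat split; intros H; [apply Hp|apply Hp|apply Hfg|apply Hfg]; rewrite H; ring.
Qed.

Lemma pu_nu1_neq0 u v : D u v -> pu (nu1 x) u v <> 0.
Proof.
  intros Huv. rewrite pu_nu1_chain by exact Huv.
  destruct (partials_nu_f_g_neq0 u v Huv) as (H1 & _ & H3 & _).
  apply Rmult_integral_contrapositive; auto.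
Qed.

Lemma pv_nu1_neq0 u v : D u v -> pv (nu1 x) u v <> 0.
Proof.
  intros Huv. rewrite pv_nu1_chain by exact Huv.
  destruct (partials_nu_f_g_neq0 u v Huv) as (_ & H2 & H3 & _).
  apply Rmult_integral_contrapositive; auto.
Qed.

Lemma pu_nu2_neq0 u v : D u v -> pu (nu2 x) u v <> 0.
Proof.
  intros Huv. rewrite pu_nu2_chain by exact Huv.
  destruct (partials_nu_f_g_neq0 u v Huv) as (H1 & _ & _ & H4).
  apply Rmult_integral_contrapositive; auto.
Qed.

(* [f] is injective on [I], so [nu1] determines [nu] and hence [nu2 = g nu]. *)
Lemma nu2_eq_of_nu1_eq u v u' v' : D u v -> D u' v' ->
  nu1 x u v = nu1 x u' v' -> nu2 x u v = nu2 x u' v'.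
Proof.
  intros Huv Huv' E. destruct Hwd as (HI & Hfg & Hnu).
  destruct (Hnu u v Huv) as (Iu & _ & _ & Ef & Eg), (Hnu u' v' Huv') as (Iu' & _ & _ & Ef' & Eg').
  rewrite Eg, Eg'. f_equal. apply (injective_of_derive_neq0 I f HI); auto.
  - intros t It. destruct (Hfg t It) as (Hf & _ & _ & Hne). split; [exact Hf|].
    intros H. apply Hne. rewrite H. ring.
  - rewrite <- Ef, <- Ef'. exact E.
Qed.

Section NearPoint.
Variables u0 v0 : R.
Hypothesis Hd0 : D u0 v0.

Lemma square_sign_pu_nu1 : exists r e, 0 < r /\ (e = 1 \/ e = -1) /\
  forall u v, Rabs (u - u0) <= r -> Rabs (v - v0) <= r -> D u v /\ 0 < e * pu (nu1 x) u v.
Proof.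
  set (p0 := pu (nu1 x) u0 v0).
  assert (Hp0 : 0 < Rabs p0) by (apply Rabs_pos_lt, pu_nu1_neq0, Hd0).
  assert (Hc : continuity_2d_pt (pu (nu1 x)) u0 v0).
  { apply continuity_2d_pt_filterlim.
    apply (smooth_cont D), Hd0. apply smooth_pu, (smooth_nu1 x D (proj1 Hsrp)). }
  destruct (Hc (mkposreal _ Hp0)) as [d1 Hd1]. simpl in Hd1.
  destruct (open2_locally_2d D HD u0 v0 Hd0) as [d2 Hd2].
  assert (Hd12 := Rmin_pos d1 d2 (cond_pos d1) (cond_pos d2)).
  pose proof (Rmin_l d1 d2). pose proof (Rmin_r d1 d2).
  exists (Rmin d1 d2 / 2), (if Rlt_dec 0 p0 then 1 else -1).
  split; [lra|split; [destruct (Rlt_dec 0 p0); auto|]].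
  intros u v Hu Hv. split; [apply Hd2; lra|].
  specialize (Hd1 u v ltac:(lra) ltac:(lra)). fold p0 in Hd1. apply Rabs_def2 in Hd1.
  destruct (Rlt_dec 0 p0).
  - rewrite Rabs_right in Hd1 by lra. lra.
  - rewrite Rabs_left in Hd1 by (assert (p0 <> 0) by (apply pu_nu1_neq0, Hd0); lra). lra.
Qed.

(* Along [v = v0], [e nu1] is increasing in [u]; its inverse [psi] expresses [nu2] on the
   line as a function of [nu1]. *)
Section AlongLine.
Variables (r e : R).
Hypothesis Hr : 0 < r.
Hypothesis He : e = 1 \/ e = -1.
Hypothesis Hsign : forall u v, Rabs (u - u0) <= r -> Rabs (v - v0) <= r ->
  D u v /\ 0 < e * pu (nu1 x) u v.

Let phi t := e * nu1 x t v0.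
Let dphi t := e * pu (nu1 x) t v0.
Let psi := increasing_inverse phi (u0 - r) (u0 + r).
Let c := nu1 x u0 v0.
Let dl := Rmin (phi (u0 + r) - phi u0) (phi u0 - phi (u0 - r)).
Let gp s := nu2 x (psi (e * s)) v0.

Let line_near t : u0 - r <= t <= u0 + r -> D t v0 /\ 0 < dphi t.
Proof.
  intros Ht. apply Hsign; [apply Rabs_le; lra|rewrite Rminus_diag, Rabs_R0; lra].
Qed.

Let phi_derive t : u0 - r <= t <= u0 + r -> is_derive phi t (dphi t).
Proof.
  intros Ht. apply (is_derive_scal (fun t => nu1 x t v0)), Derive_correct.
  apply (smooth_exu D), line_near, Ht. apply (smooth_nu1 x D (proj1 Hsrp)).
Qed.

Let dphi_pos t : u0 - r <= t <= u0 + r -> 0 < dphi t.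
Proof. apply line_near. Qed.

Let phi_incr := increasing_of_derive_pos phi dphi (u0 - r) (u0 + r) phi_derive dphi_pos.

Let dl_pos : 0 < dl.
Proof.
  assert (phi (u0 - r) < phi u0) by (apply phi_incr; lra).
  assert (phi u0 < phi (u0 + r)) by (apply phi_incr; lra).
  apply Rmin_pos; lra.
Qed.

Let interval_phi s : c - dl < s < c + dl -> phi (u0 - r) < e * s < phi (u0 + r).
Proof.
  intros Hs. pose proof (Rmin_l (phi (u0 + r) - phi u0) (phi u0 - phi (u0 - r))) as Hl.
  pose proof (Rmin_r (phi (u0 + r) - phi u0) (phi u0 - phi (u0 - r))) as Hr'.
  fold dl in Hl, Hr'. unfold phi in *. unfold c in Hs. destruct He as [-> | ->]; lra.
Qed.

Let psi_spec s : c - dl < s < c + dl ->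
  u0 - r < psi (e * s) < u0 + r /\ nu1 x (psi (e * s)) v0 = s /\ D (psi (e * s)) v0.
Proof.
  intros Hs. assert (Hi := interval_phi s Hs).
  assert (Hin := increasing_inverse_interior phi dphi (u0 - r) (u0 + r) ltac:(lra)
                   phi_derive _ Hi).
  destruct (increasing_inverse_spec phi dphi (u0 - r) (u0 + r) ltac:(lra) phi_derive
              (e * s) ltac:(lra)) as [_ Hv].
  fold psi in Hin, Hv. unfold phi in Hv.
  split; [exact Hin|split; [destruct He as [-> | ->]; lra|apply line_near; lra]].
Qed.

Let gp_derive s : c - dl < s < c + dl ->
  is_derive gp s (pu (nu2 x) (psi (e * s)) v0 / pu (nu1 x) (psi (e * s)) v0).
Proof.
  intros Hs. destruct (psi_spec s Hs) as (Hin & _ & HDs).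
  assert (Hp := dphi_pos (psi (e * s)) ltac:(lra)). unfold dphi in Hp.
  assert (He0 : e <> 0) by (destruct He; lra).
  replace (pu (nu2 x) (psi (e * s)) v0 / pu (nu1 x) (psi (e * s)) v0)
    with (e * 1 * / dphi (psi (e * s)) * pu (nu2 x) (psi (e * s)) v0)
    by (unfold dphi; field; split; [|exact He0]; intros h; rewrite h in Hp; lra).
  apply (is_derive_comp (fun w => nu2 x w v0) (fun s => psi (e * s))).
  - apply Derive_correct, (smooth_exu D); [apply (smooth_nu2 x D (proj1 Hsrp))|exact HDs].
  - apply (is_derive_comp psi (fun s => e * s)).
    + apply (is_derive_increasing_inverse phi dphi (u0 - r) (u0 + r) ltac:(lra)
               phi_derive dphi_pos), interval_phi, Hs.
    + apply (is_derive_scal (fun t => t) s e 1), (is_derive_id (K := R_AbsRing)).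
Qed.

Let gp_properties s : c - dl < s < c + dl -> ex_derive gp s /\ Derive gp s <> 0 /\ gp s < s.
Proof.
  intros Hs. destruct (psi_spec s Hs) as (Hin & Hnu1 & HDs).
  split; [eexists; apply gp_derive, Hs|split].
  - rewrite (is_derive_unique gp s _ (gp_derive s Hs)).
    assert (Hp := dphi_pos (psi (e * s)) ltac:(lra)). unfold dphi in Hp.
    apply Rmult_integral_contrapositive; split; [apply pu_nu2_neq0, HDs|].
    apply Rinv_neq_0_compat. intros h. rewrite h in Hp. lra.
  - unfold gp. destruct (proj2 (proj2 Hsrp) _ _ HDs) as [H _]. rewrite Hnu1 in H. lra.
Qed.

Lemma nu2_function_of_nu1_along_line :
  exists rho c dl gp, nu2_function_of_nu1 x D u0 v0 rho c dl gp.
Proof.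
  assert (Hc : continuity_2d_pt (nu1 x) u0 v0).
  { apply continuity_2d_pt_filterlim, (smooth_cont D); [|exact Hd0].
    apply (smooth_nu1 x D (proj1 Hsrp)). }
  destruct (Hc (mkposreal _ dl_pos)) as [d Hd]. simpl in Hd.
  assert (Hrho : 0 < Rmin d r) by (apply Rmin_pos; [apply cond_pos|exact Hr]).
  pose proof (Rmin_l d r) as Hdr. pose proof (Rmin_r d r) as Hrr.
  exists (Rmin d r), c, dl, gp.
  split; [exact Hrho|split; [exact dl_pos|split; [|exact gp_properties]]].
  intros u v [Hu Hv].
  assert (HDuv : D u v) by (apply Hsign; apply Rabs_le; lra).
  assert (Hnu1 : c - dl < nu1 x u v < c + dl).
  { specialize (Hd u v ltac:(apply Rabs_def1; lra) ltac:(apply Rabs_def1; lra)).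
    apply Rabs_def2 in Hd. unfold c. lra. }
  split; [exact HDuv|split; [exact Hnu1|]].
  destruct (psi_spec _ Hnu1) as (_ & Hs & HDs).
  exact (nu2_eq_of_nu1_eq u v _ v0 HDuv HDs (eq_sym Hs)).
Qed.

End AlongLine.

Lemma nu2_function_of_nu1_near : exists rho c dl gp, nu2_function_of_nu1 x D u0 v0 rho c dl gp.
Proof.
  destruct square_sign_pu_nu1 as (r & e & Hr & He & Hsign).
  exact (nu2_function_of_nu1_along_line r e Hr He Hsign).
Qed.

End NearPoint.
End WeingartenSurface.

(** * Geometric principal parameters *)

Lemma smooth_fun_u_of_derive (A k : R -> R) (W : R -> R -> Prop) : open2 W ->
  (forall a b, W a b -> is_derive A a (k a)) -> smooth (fun a b => k a) W ->
  smooth (fun a b => A a) W.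
Proof.
  intros HW HA Hk. apply (smooth_of_partials W HW _ (fun a b => k a) (fun _ _ => 0)).
  - intros a b Hab. apply (continuous_comp fst A); [apply continuous_fst|].
    apply (ex_derive_continuous A). exists (k a). exact (HA a b Hab).
  - intros a b Hab. split; [exists (k a); exact (HA a b Hab)|apply ex_derive_const].
  - intros a b Hab. exact (is_derive_unique _ _ _ (HA a b Hab)).
  - intros a b Hab. apply pv_of_fun_u.
  - exact Hk.
  - apply smooth_const.
Qed.

Lemma smooth_fun_v_of_derive (B k : R -> R) (W : R -> R -> Prop) : open2 W ->
  (forall a b, W a b -> is_derive B b (k b)) -> smooth (fun a b => k b) W ->
  smooth (fun a b => B b) W.
Proof.
  intros HW HB Hk. apply (smooth_of_partials W HW _ (fun _ _ => 0) (fun a b => k b)).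
  - intros a b Hab. apply (continuous_comp snd B); [apply continuous_snd|].
    apply (ex_derive_continuous B). exists (k b). exact (HB a b Hab).
  - intros a b Hab. split; [apply ex_derive_const|exists (k b); exact (HB a b Hab)].
  - intros a b Hab. apply pu_of_fun_v.
  - intros a b Hab. exact (is_derive_unique _ _ _ (HB a b Hab)).
  - apply smooth_const.
  - exact Hk.
Qed.

(* Bootstrap: [psi' = k o psi] is as regular as [psi], so [psi] gains one order at a time. *)
Lemma smooth_fun_u_of_ode (psi k : R -> R) (W S : R -> R -> Prop) : open2 W ->
  (forall a b, W a b -> S (psi a) b /\ is_derive psi a (k (psi a))) ->
  smooth (fun u v => k u) S -> smooth (fun a b => psi a) W.
Proof.
  intros HW Hpsi Hk n.
  assert (Hc : forall a b, W a b -> continuous (fun p : R * R => psi (fst p)) (a, b)).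
  { intros a b Hab. apply (continuous_comp fst psi); [apply continuous_fst|].
    apply (ex_derive_continuous psi). exists (k (psi a)). apply (Hpsi a b Hab). }
  induction n as [|n IH]; [exact Hc|].
  split; [exact Hc|split; [|split]].
  - intros a b Hab. split; [exists (k (psi a)); apply (Hpsi a b Hab)|apply ex_derive_const].
  - apply (Ck_ext W HW n (fun a b => k (psi a))).
    + intros a b Hab. symmetry. exact (is_derive_unique _ _ _ (proj2 (Hpsi a b Hab))).
    + apply (Ck_comp_sep n (fun u v => k u) S W psi (fun b => b)); auto.
      * intros a b Hab. exact (proj1 (Hpsi a b Hab)).
      * apply smooth_snd, HW.
  - apply (Ck_ext W HW n (fun _ _ => 0)); [|apply Ck_const].
    intros a b Hab. symmetry. apply pv_of_fun_u.
Qed.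

Lemma smooth_fun_v_of_ode (psi k : R -> R) (W S : R -> R -> Prop) : open2 W ->
  (forall a b, W a b -> S a (psi b) /\ is_derive psi b (k (psi b))) ->
  smooth (fun u v => k v) S -> smooth (fun a b => psi b) W.
Proof.
  intros HW Hpsi Hk n.
  assert (Hc : forall a b, W a b -> continuous (fun p : R * R => psi (snd p)) (a, b)).
  { intros a b Hab. apply (continuous_comp snd psi); [apply continuous_snd|].
    apply (ex_derive_continuous psi). exists (k (psi b)). apply (Hpsi a b Hab). }
  induction n as [|n IH]; [exact Hc|].
  split; [exact Hc|split; [|split]].
  - intros a b Hab. split; [apply ex_derive_const|exists (k (psi b)); apply (Hpsi a b Hab)].
  - apply (Ck_ext W HW n (fun _ _ => 0)); [|apply Ck_const].
    intros a b Hab. symmetry. apply pu_of_fun_v.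
  - apply (Ck_ext W HW n (fun a b => k (psi b))).
    + intros a b Hab. symmetry. exact (is_derive_unique _ _ _ (proj2 (Hpsi a b Hab))).
    + apply (Ck_comp_sep n (fun u v => k v) S W (fun a => a) psi); auto.
      * intros a b Hab. exact (proj1 (Hpsi a b Hab)).
      * apply smooth_fst, HW.
Qed.

(* The common algebraic shape of [lambda_v = 0] and [mu_u = 0] once the Codazzi equation is
   known: [E_v / 2E + (L / E)_v / (L / E - N / G) = 0]. *)
Lemma codazzi_log_derivative E G L N dE dL : 0 < E -> 0 < G -> L / E - N / G <> 0 ->
  E * G * dL = G * (dE / 2) * L + E * (dE / 2) * N ->
  dE / (2 * E) + (dL * E - L * dE) / E ^ 2 / (L / E - N / G) = 0.
Proof.
  intros HE HG Hne Cod.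
  assert (Hne' : L * G - N * E <> 0).
  { intros h. apply Hne.
    replace (L / E - N / G) with ((L * G - N * E) / (E * G)) by (field; lra).
    rewrite h. unfold Rdiv. ring. }
  replace dL with ((G * (dE / 2) * L + E * (dE / 2) * N) / (E * G))
    by (rewrite <- Cod; field; lra).
  field. repeat split; lra.
Qed.

Lemma ln_sqrt_rescaled s t : 0 < t -> ln (sqrt (/ exp s * / exp s * t)) = - s + ln (sqrt t).
Proof.
  intros Ht. assert (Hs := exp_pos s).
  rewrite sqrt_sqr_mult, ln_mult, ln_Rinv, ln_exp; try lra.
  - apply Rinv_0_lt_compat, Hs.
  - apply sqrt_lt_R0, Ht.
  - apply Rinv_0_lt_compat, Hs.
Qed.

Section GeometricParameters.
Variables (x : surface) (D : R -> R -> Prop) (u0 v0 rho c dl : R) (gp : R -> R).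
Hypothesis Hsrp : strongly_regular_principal x D.
Hypothesis Hnu1_partials : forall u v, D u v -> pu (nu1 x) u v <> 0 /\ pv (nu1 x) u v <> 0.
Hypothesis Hrel : nu2_function_of_nu1 x D u0 v0 rho c dl gp.

Let Hrho : 0 < rho := proj1 Hrel.
Let Hdl : 0 < dl := proj1 (proj2 Hrel).
Let Hsquare : forall u v, square u0 v0 rho u v ->
  D u v /\ c - dl < nu1 x u v < c + dl /\ nu2 x u v = gp (nu1 x u v) :=
  proj1 (proj2 (proj2 Hrel)).
Let Hgp : forall s, c - dl < s < c + dl -> ex_derive gp s /\ Derive gp s <> 0 /\ gp s < s :=
  proj2 (proj2 (proj2 Hrel)).

Let U := square u0 v0 rho.
Let HU : open2 U := open2_square u0 v0 rho.
Let U_D u v (H : U u v) : D u v := proj1 (Hsquare u v H).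
Let U_range u v (H : U u v) : c - dl < nu1 x u v < c + dl := proj1 (proj2 (Hsquare u v H)).
Let U_rel u v (H : U u v) : nu2 x u v = gp (nu1 x u v) := proj2 (proj2 (Hsquare u v H)).
Let Hreg : regular_surface x U := regular_surface_subset x D (proj1 Hsrp) U HU U_D.
Let Hnu1 : smooth (nu1 x) U := smooth_nu1 x U Hreg.
Let Hnu2 : smooth (nu2 x) U := smooth_nu2 x U Hreg.
Let HF u v (H : D u v) : fF x u v = 0 := proj1 (proj1 (proj2 Hsrp) u v H).
Let HM u v (H : D u v) : fM x u v = 0 := proj2 (proj1 (proj2 Hsrp) u v H).
Let gap u v (H : U u v) : 0 < nu1 x u v - nu2 x u v :=
  proj1 (proj2 (proj2 Hsrp) u v (U_D u v H)).

(* The new Weingarten data are [(id, gp, nu1)]: then [f' / (f - g) = 1 / (t - gp t)] is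
   continuous, so it has an antiderivative, which need not be the case for the given data.
   Likewise [Psi] is an antiderivative of [gp' / (gp - id)] obtained without integrating [gp']. *)
Let Phi s := RInt (fun t => / (t - gp t)) c s.
Let Psi s := ln (s - gp s) - Phi s.

Lemma Phi_derive s : c - dl < s < c + dl -> is_derive Phi s (/ (s - gp s)).
Proof.
  apply (is_derive_RInt_interval (fun t => / (t - gp t)) c (c - dl) (c + dl)); [lra|].
  intros t Ht. destruct (Hgp t Ht) as (Hd & _ & Hlt).
  apply (ex_derive_continuous (fun t => / (t - gp t))).
  apply (ex_derive_inv (fun t => t - gp t)); [|lra].
  apply (ex_derive_minus (fun t => t) gp); [apply ex_derive_id|exact Hd].
Qed.

Lemma Psi_derive s : c - dl < s < c + dl -> is_derive Psi s (Derive gp s / (gp s - s)).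
Proof.
  intros Hs. destruct (Hgp s Hs) as (Hd & _ & Hlt).
  replace (Derive gp s / (gp s - s)) with ((1 - Derive gp s) * / (s - gp s) - / (s - gp s))
    by (field; lra).
  apply (is_derive_minus (fun s => ln (s - gp s)) Phi); [|apply Phi_derive, Hs].
  apply (is_derive_comp ln (fun s => s - gp s)); [apply is_derive_ln; lra|].
  apply (is_derive_minus (fun t => t) gp); [apply (is_derive_id (K := R_AbsRing))|].
  apply Derive_correct, Hd.
Qed.

Lemma pu_nu2_gp u v : U u v -> pu (nu2 x) u v = pu (nu1 x) u v * Derive gp (nu1 x u v).
Proof.
  intros Huv. rewrite (pu_ext U HU (nu2 x) (fun a b => gp (nu1 x a b))) by (auto using U_rel).
  apply (Derive_comp gp (fun t => nu1 x t v) u).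
  - apply Hgp, U_range, Huv.
  - apply (smooth_exu U), Huv. exact Hnu1.
Qed.

Lemma Phi_nu1_derive_u u v : U u v ->
  is_derive (fun t => Phi (nu1 x t v)) u (pu (nu1 x) u v * / (nu1 x u v - nu2 x u v)).
Proof.
  intros Huv. rewrite (U_rel u v Huv).
  apply (is_derive_comp Phi (fun t => nu1 x t v)); [apply Phi_derive, U_range, Huv|].
  apply Derive_correct, (smooth_exu U); [exact Hnu1|exact Huv].
Qed.

Lemma Phi_nu1_derive_v u v : U u v ->
  is_derive (fun t => Phi (nu1 x u t)) v (pv (nu1 x) u v * / (nu1 x u v - nu2 x u v)).
Proof.
  intros Huv. rewrite (U_rel u v Huv).
  apply (is_derive_comp Phi (fun t => nu1 x u t)); [apply Phi_derive, U_range, Huv|].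
  apply Derive_correct, (smooth_exv U); [exact Hnu1|exact Huv].
Qed.

Lemma smooth_Phi_nu1 : smooth (fun u v => Phi (nu1 x u v)) U.
Proof.
  assert (Hinv : smooth (fun u v => / (nu1 x u v - nu2 x u v)) U).
  { apply smooth_inv; [exact HU| |apply smooth_minus; assumption].
    intros u v Huv. apply Rgt_not_eq, gap, Huv. }
  apply (smooth_of_partials U HU _ (fun u v => pu (nu1 x) u v * / (nu1 x u v - nu2 x u v))
           (fun u v => pv (nu1 x) u v * / (nu1 x u v - nu2 x u v))).
  - intros u v Huv. apply (continuous_comp (fun p : R * R => nu1 x (fst p) (snd p)) Phi).
    + apply (smooth_cont U); assumption.
    + apply (ex_derive_continuous Phi). eexists. apply Phi_derive, U_range, Huv.
  - intros u v Huv. split; eexists; [apply Phi_nu1_derive_u|apply Phi_nu1_derive_v]; exact Huv.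
  - intros u v Huv. apply is_derive_unique, Phi_nu1_derive_u, Huv.
  - intros u v Huv. apply is_derive_unique, Phi_nu1_derive_v, Huv.
  - apply smooth_mult; [exact HU|apply smooth_pu, Hnu1|exact Hinv].
  - apply smooth_mult; [exact HU|apply smooth_pv, Hnu1|exact Hinv].
Qed.

Lemma smooth_lam : smooth (lam x Phi (nu1 x)) U.
Proof.
  apply smooth_plus; [exact HU| |exact smooth_Phi_nu1].
  apply smooth_ln; [exact HU|intros u v Huv; apply sqrt_lt_R0, (fE_pos x U Hreg), Huv|].
  apply smooth_sqrt; [exact HU|apply (fE_pos x U Hreg)|apply (smooth_fE x U Hreg)].
Qed.

Lemma smooth_mu : smooth (mu x Psi (nu1 x)) U.
Proof.
  apply (smooth_ext U HU (fun u v =>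
    ln (sqrt (fG x u v)) + (ln (nu1 x u v - nu2 x u v) - Phi (nu1 x u v)))).
  { intros u v Huv. unfold mu. rewrite (U_rel u v Huv). reflexivity. }
  apply smooth_plus; [exact HU| |apply smooth_minus; [exact HU| |exact smooth_Phi_nu1]].
  - apply smooth_ln; [exact HU|intros u v Huv; apply sqrt_lt_R0, (fG_pos x U Hreg), Huv|].
    apply smooth_sqrt; [exact HU|apply (fG_pos x U Hreg)|apply (smooth_fG x U Hreg)].
  - apply smooth_ln; [exact HU|exact gap|apply smooth_minus; assumption].
Qed.

Lemma lam_derive_v_0 u v : U u v -> is_derive (fun t => lam x Phi (nu1 x) u t) v 0.
Proof.
  intros Huv.
  assert (HE := fE_pos x U Hreg u v Huv). assert (HG := fG_pos x U Hreg u v Huv).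
  assert (dE := Derive_correct _ _ (smooth_exv U (fE x) u v (smooth_fE x U Hreg) Huv)).
  assert (dL := Derive_correct _ _ (smooth_exv U (fL x) u v (smooth_fL x U Hreg) Huv)).
  assert (Hnu1v : pv (nu1 x) u v =
    (pv (fL x) u v * fE x u v - fL x u v * pv (fE x) u v) / (fE x u v) ^ 2).
  { apply is_derive_unique, (is_derive_div (fun t => fL x u t) (fun t => fE x u t)); auto; lra. }
  assert (Cod := codazzi_L x D (proj1 Hsrp) HF HM u v (U_D u v Huv)).
  assert (Hg := gap u v Huv). unfold nu1, nu2 in Hg.
  replace 0 with (pv (fE x) u v / (2 * fE x u v) + pv (nu1 x) u v * / (nu1 x u v - nu2 x u v)).
  - apply (is_derive_plus (fun t => ln (sqrt (fE x u t))) (fun t => Phi (nu1 x u t))).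
    + apply is_derive_ln_sqrt; assumption.
    + apply Phi_nu1_derive_v, Huv.
  - rewrite Hnu1v. unfold nu1, nu2.
    apply codazzi_log_derivative; auto; lra.
Qed.

Lemma mu_derive_u_0 u v : U u v -> is_derive (fun t => mu x Psi (nu1 x) t v) u 0.
Proof.
  intros Huv.
  assert (HE := fE_pos x U Hreg u v Huv). assert (HG := fG_pos x U Hreg u v Huv).
  assert (dG := Derive_correct _ _ (smooth_exu U (fG x) u v (smooth_fG x U Hreg) Huv)).
  assert (dN := Derive_correct _ _ (smooth_exu U (fN x) u v (smooth_fN x U Hreg) Huv)).
  assert (Hnu2u : pu (nu2 x) u v =
    (pu (fN x) u v * fG x u v - fN x u v * pu (fG x) u v) / (fG x u v) ^ 2).
  { apply is_derive_unique, (is_derive_div (fun t => fN x t v) (fun t => fG x t v)); auto; lra. }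
  assert (Cod := codazzi_N x D (proj1 Hsrp) HF HM u v (U_D u v Huv)).
  assert (Hg := gap u v Huv).
  replace 0 with (pu (fG x) u v / (2 * fG x u v) +
    pu (nu1 x) u v * (Derive gp (nu1 x u v) / (gp (nu1 x u v) - nu1 x u v))).
  - apply (is_derive_plus (fun t => ln (sqrt (fG x t v))) (fun t => Psi (nu1 x t v))).
    + apply (is_derive_ln_sqrt (fun t => fG x t v)); assumption.
    + apply (is_derive_comp Psi (fun t => nu1 x t v)); [apply Psi_derive, U_range, Huv|].
      apply Derive_correct, (smooth_exu U); [exact Hnu1|exact Huv].
  - rewrite <- (U_rel u v Huv).
    replace (pu (nu1 x) u v * (Derive gp (nu1 x u v) / (nu2 x u v - nu1 x u v)))
      with (pu (nu2 x) u v / (nu2 x u v - nu1 x u v))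
      by (rewrite pu_nu2_gp by exact Huv; field; lra).
    rewrite Hnu2u. unfold nu1, nu2 in *.
    apply codazzi_log_derivative; auto; lra.
Qed.

Lemma lam_indep_v u v : U u v -> lam x Phi (nu1 x) u v = lam x Phi (nu1 x) u v0.
Proof.
  intros [Hu Hv]. symmetry. apply (eq_of_derive_0 (fun t => lam x Phi (nu1 x) u t)).
  intros t Ht. apply lam_derive_v_0. split; [exact Hu|].
  pose proof (Rmin_glb_lt v0 v (v0 - rho) ltac:(lra) ltac:(lra)).
  pose proof (Rmax_lub_lt v0 v (v0 + rho) ltac:(lra) ltac:(lra)). lra.
Qed.

Lemma mu_indep_u u v : U u v -> mu x Psi (nu1 x) u v = mu x Psi (nu1 x) u0 v.
Proof.
  intros [Hu Hv]. symmetry. apply (eq_of_derive_0 (fun t => mu x Psi (nu1 x) t v)).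
  intros t Ht. apply mu_derive_u_0. split; [|exact Hv].
  pose proof (Rmin_glb_lt u0 u (u0 - rho) ltac:(lra) ltac:(lra)).
  pose proof (Rmax_lub_lt u0 u (u0 + rho) ltac:(lra) ltac:(lra)). lra.
Qed.

Let r := rho / 2.
Let exp_lam u := exp (lam x Phi (nu1 x) u v0).
Let exp_mu v := exp (mu x Psi (nu1 x) u0 v).
Let A u := RInt exp_lam u0 u.
Let B v := RInt exp_mu v0 v.
Let al := increasing_inverse A (u0 - r) (u0 + r).
Let be := increasing_inverse B (v0 - r) (v0 + r).
Let V := square u0 v0 r.
Let W a b := A (u0 - r) < a < A (u0 + r) /\ B (v0 - r) < b < B (v0 + r).
Let strip_u (u v : R) := u0 - rho < u < u0 + rho.
Let strip_v (u v : R) := v0 - rho < v < v0 + rho.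

Let V_U u v : V u v -> U u v.
Proof. unfold V, U, square, r. lra. Qed.

Lemma smooth_exp_lam : smooth (fun u v => exp_lam u) strip_u.
Proof.
  assert (Hs : open2 strip_u) by apply open2_strip_u.
  apply smooth_exp; [exact Hs|].
  apply (smooth_comp_sep (lam x Phi (nu1 x)) U strip_u (fun u => u) (fun _ => v0) Hs).
  - intros a b Hab. unfold U, square, strip_u in *. lra.
  - exact smooth_lam.
  - apply smooth_fst, Hs.
  - apply smooth_const.
Qed.

Lemma smooth_exp_mu : smooth (fun u v => exp_mu v) strip_v.
Proof.
  assert (Hs : open2 strip_v) by apply open2_strip_v.
  apply smooth_exp; [exact Hs|].
  apply (smooth_comp_sep (mu x Psi (nu1 x)) U strip_v (fun _ => u0) (fun v => v) Hs).
  - intros a b Hab. unfold U, square, strip_v in *. lra.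
  - exact smooth_mu.
  - apply smooth_const.
  - apply smooth_snd, Hs.
Qed.

Lemma A_derive u : u0 - rho < u < u0 + rho -> is_derive A u (exp_lam u).
Proof.
  revert u. apply (is_derive_RInt_interval exp_lam u0 (u0 - rho) (u0 + rho)); [lra|].
  intros t Ht. apply (ex_derive_continuous exp_lam).
  apply (smooth_exu strip_u (fun u v => exp_lam u) t 0).
  - exact smooth_exp_lam.
  - exact Ht.
Qed.

Lemma B_derive v : v0 - rho < v < v0 + rho -> is_derive B v (exp_mu v).
Proof.
  revert v. apply (is_derive_RInt_interval exp_mu v0 (v0 - rho) (v0 + rho)); [lra|].
  intros t Ht. apply (ex_derive_continuous exp_mu).
  apply (smooth_exv strip_v (fun u v => exp_mu v) 0 t).
  - exact smooth_exp_mu.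
  - exact Ht.
Qed.

Let A_derive_r t : u0 - r <= t <= u0 + r -> is_derive A t (exp_lam t).
Proof. intros Ht. apply A_derive. unfold r in Ht. lra. Qed.

Let B_derive_r t : v0 - r <= t <= v0 + r -> is_derive B t (exp_mu t).
Proof. intros Ht. apply B_derive. unfold r in Ht. lra. Qed.

Let exp_lam_pos t : u0 - r <= t <= u0 + r -> 0 < exp_lam t.
Proof. intros _. apply exp_pos. Qed.

Let exp_mu_pos t : v0 - r <= t <= v0 + r -> 0 < exp_mu t.
Proof. intros _. apply exp_pos. Qed.

Let Hr_lt : u0 - r < u0 + r /\ v0 - r < v0 + r.
Proof. unfold r. lra. Qed.

Lemma al_spec a : A (u0 - r) < a < A (u0 + r) ->
  u0 - r < al a < u0 + r /\ A (al a) = a /\ is_derive al a (/ exp_lam (al a)).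
Proof.
  intros Ha. split; [|split].
  - apply (increasing_inverse_interior A exp_lam _ _ (proj1 Hr_lt) A_derive_r), Ha.
  - apply (increasing_inverse_spec A exp_lam _ _ (proj1 Hr_lt) A_derive_r). lra.
  - apply (is_derive_increasing_inverse A exp_lam _ _ (proj1 Hr_lt) A_derive_r exp_lam_pos), Ha.
Qed.

Lemma be_spec b : B (v0 - r) < b < B (v0 + r) ->
  v0 - r < be b < v0 + r /\ B (be b) = b /\ is_derive be b (/ exp_mu (be b)).
Proof.
  intros Hb. split; [|split].
  - apply (increasing_inverse_interior B exp_mu _ _ (proj2 Hr_lt) B_derive_r), Hb.
  - apply (increasing_inverse_spec B exp_mu _ _ (proj2 Hr_lt) B_derive_r). lra.
  - apply (is_derive_increasing_inverse B exp_mu _ _ (proj2 Hr_lt) B_derive_r exp_mu_pos), Hb.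
Qed.

Let W_V a b : W a b -> V (al a) (be b).
Proof. intros [Ha Hb]. split; [apply al_spec, Ha|apply be_spec, Hb]. Qed.

Let Derive_al a b : W a b -> Derive al a = / exp_lam (al a).
Proof. intros [Ha _]. apply is_derive_unique, al_spec, Ha. Qed.

Let Derive_be a b : W a b -> Derive be b = / exp_mu (be b).
Proof. intros [_ Hb]. apply is_derive_unique, be_spec, Hb. Qed.

Let Derive_al_pos a b : W a b -> 0 < Derive al a.
Proof. intros Hab. rewrite (Derive_al a b Hab). apply Rinv_0_lt_compat, exp_pos. Qed.

Let Derive_be_pos a b : W a b -> 0 < Derive be b.
Proof. intros Hab. rewrite (Derive_be a b Hab). apply Rinv_0_lt_compat, exp_pos. Qed.

Let HW : open2 W := open2_rect _ _ _ _.
Let HV : open2 V := open2_square u0 v0 r.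

Lemma smooth_al : smooth (fun a b => al a) W.
Proof.
  apply (smooth_fun_u_of_ode al (fun u => / exp_lam u) W strip_u HW).
  - intros a b Hab. destruct (W_V a b Hab) as [Hu _]. unfold strip_u, r in *.
    split; [lra|apply al_spec, Hab].
  - apply smooth_inv; [apply open2_strip_u|intros; apply Rgt_not_eq, exp_pos|exact smooth_exp_lam].
Qed.

Lemma smooth_be : smooth (fun a b => be b) W.
Proof.
  apply (smooth_fun_v_of_ode be (fun v => / exp_mu v) W strip_v HW).
  - intros a b Hab. destruct (W_V a b Hab) as [_ Hv]. unfold strip_v, r in *.
    split; [lra|apply be_spec, Hab].
  - apply smooth_inv; [apply open2_strip_v|intros; apply Rgt_not_eq, exp_pos|exact smooth_exp_mu].
Qed.

Lemma diffeo_rescaling : diffeo (fun a b => (al a, be b)) (fun u v => (A u, B v)) W V.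
Proof.
  assert (HAincr := increasing_of_derive_pos A exp_lam _ _ A_derive_r exp_lam_pos).
  assert (HBincr := increasing_of_derive_pos B exp_mu _ _ B_derive_r exp_mu_pos).
  split; [exact HW|split; [exact HV|]].
  split; [exact smooth_al|split; [exact smooth_be|]].
  split; [apply (smooth_fun_u_of_derive A exp_lam V HV)|].
  { intros u v [Hu _]. apply A_derive_r. lra. }
  { apply (smooth_subset strip_u); [|exact smooth_exp_lam].
    intros u v [Hu _]. unfold strip_u, r in *. lra. }
  split; [apply (smooth_fun_v_of_derive B exp_mu V HV)|].
  { intros u v [_ Hv]. apply B_derive_r. lra. }
  { apply (smooth_subset strip_v); [|exact smooth_exp_mu].
    intros u v [_ Hv]. unfold strip_v, r in *. lra. }
  split; simpl.
  - intros a b Hab. split; [apply W_V, Hab|].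
    destruct Hab as [Ha Hb].
    rewrite (proj1 (proj2 (al_spec a Ha))), (proj1 (proj2 (be_spec b Hb))). reflexivity.
  - intros u v [Hu Hv]. split.
    + split; split; first [apply HAincr|apply HBincr]; lra.
    + unfold al, be.
      rewrite (increasing_inverse_phi A exp_lam _ _ (proj1 Hr_lt) A_derive_r exp_lam_pos u),
        (increasing_inverse_phi B exp_mu _ _ (proj2 Hr_lt) B_derive_r exp_mu_pos v) by lra.
      reflexivity.
Qed.

Let y := reparam x (fun a b => (al a, be b)).
Let Hreg_V : regular_surface x V := regular_surface_subset x U Hreg V HV V_U.

Lemma lam_rescaled a b : W a b -> lam y Phi (fun a b => nu1 x (al a) (be b)) a b = 0.
Proof.
  intros Hab. unfold lam, y.
  rewrite (fE_reparam x V W al be W_V smooth_al Hreg_V a b Hab), (Derive_al a b Hab).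
  unfold exp_lam. rewrite ln_sqrt_rescaled by (apply (fE_pos x V Hreg_V), W_V, Hab).
  assert (Hlam := lam_indep_v _ _ (V_U _ _ (W_V a b Hab))). unfold lam in *. lra.
Qed.

Lemma mu_rescaled a b : W a b -> mu y Psi (fun a b => nu1 x (al a) (be b)) a b = 0.
Proof.
  intros Hab. unfold mu, y.
  rewrite (fG_reparam x V W al be W_V smooth_be Hreg_V a b Hab), (Derive_be a b Hab).
  unfold exp_mu. rewrite ln_sqrt_rescaled by (apply (fG_pos x V Hreg_V), W_V, Hab).
  assert (Hmu := mu_indep_u _ _ (V_U _ _ (W_V a b Hab))). unfold mu in *. lra.
Qed.

Lemma weingarten_data_rescaled : weingarten_data y W (fun s => c - dl < s < c + dl)
  (fun s => s) gp (fun a b => nu1 x (al a) (be b)).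
Proof.
  assert (Hnu1_V : smooth (nu1 x) V) by (apply (smooth_subset U); [exact V_U|exact Hnu1]).
  split; [|split].
  - split; [apply open_and; [apply open_gt|apply open_lt]|intros s1 s2 s3 H1 H3 H2; lra].
  - intros t Ht. destruct (Hgp t Ht) as (Hd & Hne & Hlt).
    split; [apply ex_derive_id|split; [exact Hd|split; [lra|]]].
    rewrite Derive_id, Rmult_1_l. exact Hne.
  - intros a b Hab. assert (HUab := V_U _ _ (W_V a b Hab)).
    split; [apply U_range, HUab|split; [|split; [|split]]].
    + apply (smooth_differentiable_pt _ W); [exact HW| |exact Hab].
      exact (smooth_comp_reparam V W al be HW W_V smooth_al smooth_be (nu1 x) Hnu1_V).
    + rewrite (pu_comp_sep V W al be W_V smooth_al (nu1 x) a b Hnu1_V Hab),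
        (pv_comp_sep V W al be W_V smooth_be (nu1 x) a b Hnu1_V Hab).
      destruct (Hnu1_partials _ _ (U_D _ _ HUab)) as [H1 H2].
      assert (H3 := Derive_al_pos a b Hab). assert (H4 := Derive_be_pos a b Hab).
      apply Rmult_integral_contrapositive; split; apply Rmult_integral_contrapositive; split;
        try assumption; lra.
    + exact (nu1_reparam x V W al be HW W_V smooth_al smooth_be Derive_al_pos Derive_be_pos
               Hreg_V a b Hab).
    + unfold y.
      rewrite (nu2_reparam x V W al be HW W_V smooth_al smooth_be Derive_al_pos Derive_be_pos
                 Hreg_V a b Hab).
      apply U_rel, HUab.
Qed.

Lemma geometric_principal_rescaled : geometric_principal y W.
Proof.
  split.
  { apply (strongly_regular_principal_reparam x V W al be HW W_V smooth_al smooth_be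
             Derive_al_pos Derive_be_pos Hreg_V).
    apply (strongly_regular_principal_subset x D); [exact Hsrp|exact HV|].
    intros u v Huv. apply U_D, V_U, Huv. }
  exists (fun s => c - dl < s < c + dl), (fun s => s), gp, (fun a b => nu1 x (al a) (be b)),
    Phi, Psi.
  split; [exact weingarten_data_rescaled|split; [|split]].
  - intros t Ht. destruct (Hgp t Ht) as (_ & _ & Hlt). rewrite Derive_id.
    replace (1 / (t - gp t)) with (/ (t - gp t)) by (field; lra).
    apply Phi_derive, Ht.
  - exact Psi_derive.
  - exists 0, 0. intros a b Hab. split; [apply lam_rescaled|apply mu_rescaled]; exact Hab.
Qed.

Lemma local_geometric_principal_parameters :
  exists (V W : R -> R -> Prop) (theta eta : R -> R -> R * R),
    V u0 v0 /\ (forall u v, V u v -> D u v) /\ diffeo theta eta W V /\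
    geometric_principal (reparam x theta) W.
Proof.
  exists V, W, (fun a b => (al a, be b)), (fun u v => (A u, B v)).
  split; [unfold V, square, r; lra|split; [intros u v Huv; apply U_D, V_U, Huv|]].
  exact (conj diffeo_rescaling geometric_principal_rescaled).
Qed.

End GeometricParameters.

Theorem theorem4p4 :
  forall (x : surface) (D : R -> R -> Prop),
    strongly_regular_weingarten x D ->
    forall u0 v0, D u0 v0 ->
      exists (V W : R -> R -> Prop) (theta eta : R -> R -> R * R),
        V u0 v0 /\ (forall u v, V u v -> D u v) /\
        diffeo theta eta W V /\
        geometric_principal (reparam x theta) W.
Proof.
  intros x D [Hsrp (I & f & g & nu & Hwd)] u0 v0 Hd0.
  destruct (nu2_function_of_nu1_near x D I f g nu Hsrp Hwd u0 v0 Hd0)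
    as (rho & c & dl & gp & Hrel).
  apply (local_geometric_principal_parameters x D u0 v0 rho c dl gp Hsrp); [|exact Hrel].
  intros u v Huv. split.
  - exact (pu_nu1_neq0 x D I f g nu Hsrp Hwd u v Huv).
  - exact (pv_nu1_neq0 x D I f g nu Hsrp Hwd u v Huv).
Qed.
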